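(* Fix integers $\tilde\ell\ge1$ and $\tilde m_1,\dots,\tilde m_{\tilde\ell}\ge1$ with $\sum_a\tilde m_a<d$, and let $\theta^*\in\Omega_b$. Suppose each of $n$ users is independently offered all $d$ items, draws a PL ranking with parameter $\theta^*$, and reveals the ordered partition consisting of the set of her top $\tilde m_1$ items, the set of the next $\tilde m_2$ items, ..., and the set of the remaining items. Then for every $M\ge\min_{a\in[\tilde\ell]}\tilde m_a$, the order-$M$ rank-breaking estimator $\widehat\theta\in\arg\max_{\theta\in\Omega_b}\mathcal{L}_{\rm RB}(\theta)$ is consistent, i.e. $\widehat\theta\to\theta^*$ as $n\to\infty$.
   Context: PL model: items $[d]$, parameter $\theta\in\mathbb{R}^d$; when a set $S$ is offered, a ranking $\sigma:[|S|]\to S$ (position 1 most preferred) is drawn with probability $\prod_{i=1}^{|S|-1}e^{\theta_{\sigma(i)}}/\sum_{i'=i}^{|S|}e^{\theta_{\sigma(i')}}$. $\Omega_b=\{\theta\in\mathbb{R}^d:\sum_i\theta_i=0,|\theta_i|\le b\}$. For disjoint nonempty $T,B$, $\mathbb{P}_\theta(B\prec T)=\sum_{\sigma}\prod_{u=1}^{|T|}\frac{e^{\theta_{\sigma(u)}}}{\sum_{c=u}^{|T|}e^{\theta_{\sigma(c)}}+\sum_{i\in B}e^{\theta_i}}$ (sum over orderings $\sigma$ of $T$). From each revealed ordered partition, one rank-breaking edge is formed for each of the first $\tilde\ell$ subsets: its top-set $T$ is that subset and its bottom-set $B$ is the union of all subsets below it. The order-$M$ log-likelihood $\mathcal{L}_{\rm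 RB}(\theta)$ is the sum over all users and all their edges with $|T|\le M$ of $\log\mathbb{P}_\theta(B\prec T)$. *)

From Stdlib Require Import Reals List Lia ClassicalEpsilon.
Import ListNotations.
Open Scope R_scope.

(* Items are 0..d-1.  A ranking of a set is a list (head = most preferred). *)

Fixpoint insert_all (x : nat) (l : list nat) : list (list nat) :=
  match l with
  | [] => [[x]]
  | y :: l' => (x :: y :: l') :: map (cons y) (insert_all x l')
  end.

Fixpoint perms (l : list nat) : list (list nat) :=
  match l with
  | [] => [[]]
  | x :: l' => flat_map (insert_all x) (perms l')
  end.

Definition sumR (l : list R) : R := fold_right Rplus 0 l.
Definition prodR (l : list R) : R := fold_right Rmult 1 l.

Definition wt (th : nat -> R) (i : nat) : R := exp (th i).
Definition sumw (th : nat -> R) (S : list nat) : R := sumR (map (wt th) S).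

(* PL probability of the ranking sigma of the offered set (= elements of sigma):
   prod_{i=1}^{|S|-1} e^{th sigma(i)} / sum_{i'>=i} e^{th sigma(i')} *)
Fixpoint pl_prob (th : nat -> R) (s : list nat) : R :=
  match s with
  | [] => 1
  | [_] => 1
  | x :: s' => wt th x / sumw th s * pl_prob th s'
  end.

Fixpoint top_prob (th : nat -> R) (B : list nat) (s : list nat) : R :=
  match s with
  | [] => 1
  | x :: s' => wt th x / (sumw th s + sumw th B) * top_prob th B s'
  end.

(* P_theta(B < T): sum over orderings of T *)
Definition edge_prob (th : nat -> R) (T B : list nat) : R :=
  sumR (map (top_prob th B) (perms T)).

Definition rankings (d : nat) : list (list nat) := perms (seq 0 d).

(* Contribution of one user, whose full ranking is sigma, to the order-M
   rank-breaking log-likelihood, for the revealed partition with block sizes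
   m = [m_1; ...; m_l] (followed by the remaining items).  The a-th edge has
   top-set = the a-th block and bottom-set = the union of all blocks below it;
   it is kept iff |T| = m_a <= M. *)
Fixpoint rb_user (th : nat -> R) (M : nat) (m : list nat) (sigma : list nat) : R :=
  match m with
  | [] => 0
  | ma :: m' =>
      (if Nat.leb ma M
       then ln (edge_prob th (firstn ma sigma) (skipn ma sigma))
       else 0)
      + rb_user th M m' (skipn ma sigma)
  end.

Definition L_RB (th : nat -> R) (M : nat) (m : list nat)
  (sample : list (list nat)) : R :=
  sumR (map (rb_user th M m) sample).

(* Omega_b (only coordinates 0..d-1 matter) *)
Definition Omega (d : nat) (b : R) (th : nat -> R) : Prop :=
  sumR (map th (seq 0 d)) = 0 /\ (forall i, (i < d)%nat -> Rabs (th i) <= b).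

Definition is_RB_estimate (d : nat) (b : R) (M : nat) (m : list nat)
  (sample : list (list nat)) (th : nat -> R) : Prop :=
  Omega d b th /\
  (forall th', Omega d b th' -> L_RB th' M m sample <= L_RB th M m sample).

Fixpoint samples (d n : nat) : list (list (list nat)) :=
  match n with
  | O => [[]]
  | S n' => flat_map (fun s => map (fun r => r :: s) (rankings d)) (samples d n')
  end.

Definition indic (P : Prop) : R :=
  if excluded_middle_informative P then 1 else 0.

Definition prob (d : nat) (th : nat -> R) (n : nat)
  (E : list (list nat) -> Prop) : R :=
  sumR (map (fun s => prodR (map (pl_prob th) s) * indic (E s)) (samples d n)).

From Stdlib Require Import Reals List Lia Lra Permutation Sorting ClassicalEpsilon.
Import ListNotations.
Open Scope R_scope.

(** Write [Δ = θ - θ*], and let [ℓ_θ] be one user's contribution to the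
    rank-breaking log-likelihood.  The expected gap [V(θ) = E_θ* [ℓ_θ* - ℓ_θ]]
    is a sum of Kullback-Leibler divergences between the laws of the revealed
    top blocks, hence nonnegative.  If some [|Δ_i| > ε], sort the items by
    [Δ]; since [Σ Δ = 0], the largest and smallest entries differ by more
    than [ε].  Take as top-set [T] the [k] items with the largest [Δ] ([k] the
    size of the first block kept by the estimator) and as bottom-set [B] the
    items after the skipped blocks.  After rescaling all weights of [θ*] by a
    common factor [e^τ], [τ] a threshold separating [Δ] on [T] from [Δ] on
    [B], the weights of [T] only grow and those of [B] only shrink when passing
    to [θ], one of them by a definite amount; so the PL probability that [T]
    beats [B] is larger under [θ] by a margin depending only on [b], [d], [ε].
    Hence [V(θ) >= γ > 0] uniformly on the [ε]-far part of [Ω_b].  On the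
    other hand the empirical log-likelihood gap equals
    [n V(θ) + Σ_σ (N_σ - n p_σ) g_σ] with [N_σ] the number of users ranking
    as [σ] and [g_σ] bounded, so an [ε]-far maximiser requires the counts to
    deviate from their means by a constant times [n], which by Chebyshev has
    probability [O(1/n)]. *)

(** * Orderings and subsets of lists *)

Lemma In_insert_all x l s :
  In s (insert_all x l) <-> exists l1 l2, l = l1 ++ l2 /\ s = l1 ++ x :: l2.
Proof.
  revert s; induction l as [|y l IH]; intro s; simpl; split.
  - intros [<-|[]]. exists [], []; auto.
  - intros [l1 [l2 [E ->]]]. destruct l1, l2; simpl in *; try discriminate. left; auto.
  - intros [<-|H]. { exists [], (y :: l); auto. }
    apply in_map_iff in H as [s' [<- H]]. apply IH in H as [l1 [l2 [-> ->]]].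
    exists (y :: l1), l2; auto.
  - intros [l1 [l2 [E ->]]]. destruct l1 as [|z l1]; simpl in *.
    + left; subst; auto.
    + inversion E; subst. right. apply in_map, IH. eauto.
Qed.

Lemma In_perms l s : In s (perms l) <-> Permutation l s.
Proof.
  revert s; induction l as [|x l IH]; intro s; simpl.
  - split; [intros [<-|[]]; auto|]. intro H. apply Permutation_nil in H. auto.
  - rewrite in_flat_map. split.
    + intros [p [Hp Hs]]. apply IH in Hp. apply In_insert_all in Hs as [l1 [l2 [-> ->]]].
      apply Permutation_cons_app. auto.
    + intro H. assert (Hx : In x s) by (apply (Permutation_in _ H); left; auto).
      apply in_split in Hx as [l1 [l2 ->]]. exists (l1 ++ l2). split.
      * apply IH. eapply Permutation_cons_app_inv; eauto.
      * apply In_insert_all. eauto.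
Qed.

Lemma perms_refl l : In l (perms l).
Proof. apply In_perms. reflexivity. Qed.

Lemma NoDup_flat_map_disjoint {A B} (f : A -> list B) L :
  NoDup L -> (forall a, In a L -> NoDup (f a)) ->
  (forall a a' y, In a L -> In a' L -> In y (f a) -> In y (f a') -> a = a') ->
  NoDup (flat_map f L).
Proof.
  induction L as [|a L IH]; simpl; intros HL Hf Hd; [constructor|].
  inversion HL; subst. apply NoDup_app.
  - apply Hf; left; auto.
  - apply IH; auto. intros; eapply Hd; eauto; right; auto.
  - intros y Y1 Y2. apply in_flat_map in Y2 as [a' [Ha' Y2]].
    assert (a = a') by (eapply Hd; [left|right|..]; eauto). subst. contradiction.
Qed.

Lemma NoDup_insert_all x p : ~ In x p -> NoDup (insert_all x p).
Proof.
  induction p as [|y p IH]; simpl; intro H.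
  - repeat constructor. auto.
  - constructor.
    + intro Hin. apply in_map_iff in Hin as [s [E _]]. inversion E. auto.
    + apply FinFun.Injective_map_NoDup; [intros u v E; inversion E; auto | auto].
Qed.

Lemma app_cons_inj (x : nat) a1 a2 b1 b2 :
  a1 ++ x :: a2 = b1 ++ x :: b2 -> ~ In x a1 -> ~ In x b1 -> a1 = b1 /\ a2 = b2.
Proof.
  revert b1; induction a1 as [|u a1 IH]; intros [|v b1]; simpl; intros E H1 H2;
    inversion E; subst; auto; try (exfalso; auto; fail).
  destruct (IH b1) as [-> ->]; auto.
Qed.

Lemma NoDup_perms l : NoDup l -> NoDup (perms l).
Proof.
  induction l as [|x l IH]; simpl; intro H; [repeat constructor; auto|].
  inversion H as [|? ? Hx Hl]; subst.
  assert (Hout : forall p, In p (perms l) -> ~ In x p).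
  { intros p Hp Hxp. apply In_perms in Hp. apply Hx. eapply Permutation_in; [symmetry|]; eauto. }
  apply NoDup_flat_map_disjoint; auto.
  - intros p Hp. apply NoDup_insert_all, Hout, Hp.
  - intros p q s Hp Hq Y1 Y2.
    apply In_insert_all in Y1 as [a1 [a2 [-> ->]]].
    apply In_insert_all in Y2 as [b1 [b2 [-> E]]].
    apply Hout in Hp, Hq.
    apply app_cons_inj in E as [-> ->]; auto;
      intro; [apply Hp | apply Hq]; apply in_or_app; auto.
Qed.

Lemma NoDup_app_disjoint {A} (l1 l2 : list A) x :
  NoDup (l1 ++ l2) -> In x l1 -> In x l2 -> False.
Proof.
  induction l1 as [|y l1 IH]; simpl; intros H H1 H2; auto.
  inversion H as [|? ? Hy Hr]; subst. destruct H1 as [->|H1]; eauto.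
  apply Hy, in_or_app; auto.
Qed.

Lemma sumR_app a b : sumR (a ++ b) = sumR a + sumR b.
Proof. induction a; simpl; [ring | rewrite IHa; ring]. Qed.

Lemma sumR_Permutation a b : Permutation a b -> sumR a = sumR b.
Proof. induction 1; simpl; try ring; congruence. Qed.

Lemma sumR_flat_map {A B} (f : B -> R) (g : A -> list B) L :
  sumR (map f (flat_map g L)) = sumR (map (fun a => sumR (map f (g a))) L).
Proof. induction L; simpl; auto. rewrite map_app, sumR_app, IHL; auto. Qed.

Lemma sumR_map_ext_in {A} (f g : A -> R) L :
  (forall a, In a L -> f a = g a) -> sumR (map f L) = sumR (map g L).
Proof. intro H; f_equal; apply map_ext_in; auto. Qed.

Lemma sumR_le {A} (f g : A -> R) L :
  (forall a, In a L -> f a <= g a) -> sumR (map f L) <= sumR (map g L).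
Proof. induction L; simpl; intros; [lra|]. apply Rplus_le_compat; auto. Qed.

Lemma sumR_ge0 {A} (f : A -> R) L : (forall a, In a L -> 0 <= f a) -> 0 <= sumR (map f L).
Proof. induction L; simpl; intros; [lra|]. apply Rplus_le_le_0_compat; auto. Qed.

Lemma sumR_pos {A} (f : A -> R) L :
  L <> [] -> (forall a, In a L -> 0 < f a) -> 0 < sumR (map f L).
Proof.
  destruct L as [|y L]; [congruence|]. intros _ H. simpl.
  assert (0 <= sumR (map f L)) by (apply sumR_ge0; intros; left; apply H; right; auto).
  specialize (H y (or_introl eq_refl)). lra.
Qed.

Lemma sumR_scal_l {A} c (f : A -> R) L :
  sumR (map (fun a => c * f a) L) = c * sumR (map f L).
Proof. induction L; simpl; [ring | rewrite IHL; ring]. Qed.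

Lemma sumR_add {A} (f g : A -> R) L :
  sumR (map (fun a => f a + g a) L) = sumR (map f L) + sumR (map g L).
Proof. induction L; simpl; [ring | rewrite IHL; ring]. Qed.

Lemma sumR_sub {A} (f g : A -> R) L :
  sumR (map (fun a => f a - g a) L) = sumR (map f L) - sumR (map g L).
Proof. induction L; simpl; [ring | rewrite IHL; ring]. Qed.

Lemma sumR_const {A} (c : R) (L : list A) : sumR (map (fun _ => c) L) = INR (length L) * c.
Proof.
  induction L as [|x L IH]; [simpl; ring|].
  change (c + sumR (map (fun _ => c) L) = INR (S (length L)) * c).
  rewrite IH, S_INR. ring.
Qed.

Lemma sumR_swap {A B} (F : A -> B -> R) La Lb :
  sumR (map (fun a => sumR (map (F a) Lb)) La) =
  sumR (map (fun b => sumR (map (fun a => F a b) La)) Lb).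
Proof.
  induction La as [|a La IH]; simpl.
  - rewrite sumR_const. ring.
  - rewrite IH, <- sumR_add. auto.
Qed.

Lemma sumR_le_margin {A} (f g : A -> R) L a c :
  (forall b, In b L -> g b <= f b) -> In a L -> g a + c <= f a ->
  sumR (map g L) + c <= sumR (map f L).
Proof.
  intros H Ha Hc. apply in_split in Ha as [L1 [L2 ->]].
  rewrite !map_app, !sumR_app. simpl.
  assert (sumR (map g L1) <= sumR (map f L1))
    by (apply sumR_le; intros; apply H, in_or_app; auto).
  assert (sumR (map g L2) <= sumR (map f L2))
    by (apply sumR_le; intros; apply H, in_or_app; simpl; auto).
  lra.
Qed.

Lemma sumR_ge_term {A} (f : A -> R) L a :
  (forall b, In b L -> 0 <= f b) -> In a L -> f a <= sumR (map f L).
Proof.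
  intros H Ha.
  pose proof (sumR_le_margin f (fun _ => 0) L a (f a) H Ha ltac:(lra)) as E.
  rewrite sumR_const in E. lra.
Qed.

Definition inb (x : nat) (S : list nat) : bool := existsb (Nat.eqb x) S.

Lemma inb_true x S : inb x S = true <-> In x S.
Proof.
  unfold inb. rewrite existsb_exists. split.
  - intros [y [Hy E]]. apply Nat.eqb_eq in E. subst; auto.
  - intros H. exists x. split; auto. apply Nat.eqb_refl.
Qed.

Lemma inb_false x S : inb x S = false <-> ~ In x S.
Proof. rewrite <- inb_true. destruct (inb x S); split; intros; try congruence; tauto. Qed.

Definition ldiff (l S : list nat) : list nat := filter (fun x => negb (inb x S)) l.

Lemma In_ldiff x l S : In x (ldiff l S) <-> In x l /\ ~ In x S.
Proof. unfold ldiff. rewrite filter_In, Bool.negb_true_iff, inb_false. tauto. Qed.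

Lemma incl_ldiff l S : incl (ldiff l S) l.
Proof. intros x Hx. apply In_ldiff in Hx; tauto. Qed.

Lemma NoDup_ldiff l S : NoDup l -> NoDup (ldiff l S).
Proof. apply NoDup_filter. Qed.

Lemma ldiff_comm l A B : ldiff (ldiff l A) B = ldiff (ldiff l B) A.
Proof.
  induction l as [|x l IH]; simpl; auto. unfold ldiff in *; simpl.
  destruct (inb x A) eqn:EA, (inb x B) eqn:EB; simpl;
    try rewrite EA; try rewrite EB; simpl; auto; f_equal; auto.
Qed.

Lemma Permutation_filter_split (f : nat -> bool) l :
  Permutation l (filter f l ++ filter (fun x => negb (f x)) l).
Proof.
  induction l as [|x l IH]; simpl; auto.
  destruct (f x); simpl; auto. apply Permutation_cons_app; auto.
Qed.

(** The [k]-element sublists of [l]: each [k]-subset of a duplicate-free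
    [l] appears exactly once, listed in the order of [l]. *)
Fixpoint subsets (l : list nat) (k : nat) {struct l} : list (list nat) :=
  match k with
  | O => [[]]
  | S k' => match l with
            | [] => []
            | x :: l' => map (cons x) (subsets l' k') ++ subsets l' (S k')
            end
  end.

Lemma subsets_0 l : subsets l 0 = [[]].
Proof. destruct l; auto. Qed.

Lemma subsets_1 l : subsets l 1 = map (fun x => [x]) l.
Proof. induction l; simpl; auto. rewrite IHl, subsets_0. auto. Qed.

Lemma subsets_incl l k S : In S (subsets l k) -> incl S l.
Proof.
  revert k S; induction l as [|x l IH]; intros [|k] S; simpl; intros H;
    try (destruct H as [<-|[]]; intros y []); try contradiction.
  apply in_app_or in H as [H|H].
  - apply in_map_iff in H as [S' [<- H]].
    intros y [<-|Hy]; [left; auto | right; eapply IH; eauto].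
  - intros y Hy; right; eapply IH; eauto.
Qed.

Lemma subsets_length l k S : In S (subsets l k) -> length S = k.
Proof.
  revert k S; induction l as [|x l IH]; intros [|k] S; simpl; intros H;
    try (destruct H as [<-|[]]; auto); try contradiction.
  apply in_app_or in H as [H|H].
  - apply in_map_iff in H as [S' [<- H]]. simpl. f_equal. eapply IH; eauto.
  - eapply IH; eauto.
Qed.

Lemma subsets_filter l k S :
  NoDup l -> In S (subsets l k) -> S = filter (fun y => inb y S) l.
Proof.
  revert k S; induction l as [|x l IH]; intros [|k] S Hl H.
  - destruct H as [<-|[]]; auto.
  - contradiction.
  - destruct H as [<-|[]]. simpl. clear. induction l; simpl; auto.
  - inversion Hl as [|? ? Hx Hl']; subst. simpl in H |- *.
    apply in_app_or in H as [H|H].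
    + apply in_map_iff in H as [S' [<- H]].
      assert (E : inb x (x :: S') = true) by (apply inb_true; left; auto).
      rewrite E. f_equal.
      rewrite (IH _ _ Hl' H) at 1. apply filter_ext_in. intros y Hy.
      unfold inb; simpl. destruct (Nat.eqb y x) eqn:Eq; auto.
      apply Nat.eqb_eq in Eq; subst; contradiction.
    + assert (E : inb x S = false).
      { apply inb_false. intro HxS. apply Hx. eapply subsets_incl; eauto. }
      rewrite E. eapply IH; eauto.
Qed.

Lemma NoDup_subsets_elem l k S : NoDup l -> In S (subsets l k) -> NoDup S.
Proof. intros Hl H. rewrite (subsets_filter _ _ _ Hl H). apply NoDup_filter; auto. Qed.

Lemma filter_In_subsets (f : nat -> bool) l :
  In (filter f l) (subsets l (length (filter f l))).
Proof.
  induction l as [|x l IH]; simpl; [left; auto|].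
  destruct (f x); simpl.
  - apply in_or_app; left. apply in_map; auto.
  - destruct (length (filter f l)) eqn:E.
    + apply length_zero_iff_nil in E. rewrite E. left; auto.
    + apply in_or_app; right. auto.
Qed.

Lemma NoDup_subsets l k : NoDup l -> NoDup (subsets l k).
Proof.
  revert k; induction l as [|x l IH]; intros [|k] Hl; simpl;
    try (repeat constructor; auto; fail).
  inversion Hl as [|? ? Hx Hl']; subst. apply NoDup_app.
  - apply FinFun.Injective_map_NoDup; auto. intros u v E; inversion E; auto.
  - auto.
  - intros S Y1 Y2. apply in_map_iff in Y1 as [S' [<- _]].
    apply subsets_incl in Y2. apply Hx, Y2. left; auto.
Qed.

Lemma subsets_eq_of_members l k1 k2 S1 S2 :
  NoDup l -> In S1 (subsets l k1) -> In S2 (subsets l k2) ->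
  (forall x, In x S1 <-> In x S2) -> S1 = S2.
Proof.
  intros Hl H1 H2 E. rewrite (subsets_filter _ _ _ Hl H1), (subsets_filter _ _ _ Hl H2).
  apply filter_ext. intro y. destruct (inb y S1) eqn:A, (inb y S2) eqn:B; auto.
  - apply inb_true in A. apply inb_false in B. exfalso; apply B, E; auto.
  - apply inb_false in A. apply inb_true in B. exfalso; apply A, E; auto.
Qed.

Lemma Permutation_subset_ldiff l k S :
  NoDup l -> In S (subsets l k) -> Permutation l (S ++ ldiff l S).
Proof.
  intros Hl H. pose proof (Permutation_filter_split (fun y => inb y S) l) as P.
  rewrite <- (subsets_filter _ _ _ Hl H) in P. exact P.
Qed.

Lemma length_ldiff_subset l k S :
  NoDup l -> In S (subsets l k) -> length (ldiff l S) = (length l - k)%nat.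
Proof.
  intros Hl HS. pose proof (Permutation_length (Permutation_subset_ldiff _ _ _ Hl HS)) as E.
  rewrite length_app, (subsets_length _ _ _ HS) in E. lia.
Qed.

Lemma subsets_Permutation_exists l S :
  NoDup l -> NoDup S -> incl S l ->
  exists S', In S' (subsets l (length S)) /\ Permutation S' S.
Proof.
  intros Hl HS Hi. set (S' := filter (fun y => inb y S) l).
  assert (P : Permutation S' S).
  { apply NoDup_Permutation; [apply NoDup_filter; auto | auto |].
    intro x. unfold S'. rewrite filter_In, inb_true. split; [tauto | auto]. }
  exists S'. split; auto. rewrite <- (Permutation_length P). apply filter_In_subsets.
Qed.

Lemma In_ldiff_Permutation l S S' x :
  Permutation S S' -> In x (ldiff l S) <-> In x (ldiff l S').
Proof.
  intro P. rewrite !In_ldiff. split; intros [H1 H2]; split; auto; intro H; apply H2.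
  - apply (Permutation_in _ (Permutation_sym P) H).
  - apply (Permutation_in _ P H).
Qed.

Lemma Permutation_ldiff1 l x : NoDup l -> In x l -> Permutation l (x :: ldiff l [x]).
Proof.
  intros Hl Hx. apply (Permutation_subset_ldiff l 1 [x]); auto.
  rewrite subsets_1. apply (in_map (fun y => [y])); auto.
Qed.

Lemma length_ldiff1 l x : NoDup l -> In x l -> length l = S (length (ldiff l [x])).
Proof. intros Hl Hx. exact (Permutation_length (Permutation_ldiff1 l x Hl Hx)). Qed.

Lemma firstn_length_app {A} (t r : list A) : firstn (length t) (t ++ r) = t.
Proof. induction t; simpl; auto. f_equal; auto. Qed.

Lemma skipn_length_app {A} (t r : list A) : skipn (length t) (t ++ r) = r.
Proof. induction t; simpl; auto. Qed.

Definition split_perms (l : list nat) (k : nat) : list (list nat) :=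
  flat_map (fun S => flat_map (fun t => map (app t) (perms (ldiff l S))) (perms S))
           (subsets l k).

Lemma In_split_perms l k s :
  NoDup l -> (k <= length l)%nat -> In s (split_perms l k) <-> Permutation l s.
Proof.
  intros Hl Hk. unfold split_perms. rewrite in_flat_map. split.
  - intros [S [HS Hs]]. apply in_flat_map in Hs as [t [Ht Hs]].
    apply in_map_iff in Hs as [r [<- Hr]]. apply In_perms in Ht, Hr.
    eapply Permutation_trans; [eapply Permutation_subset_ldiff; eauto|].
    apply Permutation_app; auto.
  - intros Hp.
    set (t := firstn k s). set (r := skipn k s).
    assert (Hlt : length t = k)
      by (unfold t; rewrite length_firstn, <- (Permutation_length Hp); lia).
    rewrite <- (firstn_skipn k s) in Hp. fold t r in Hp.
    assert (Hs : NoDup (t ++ r)) by (eapply Permutation_NoDup; eauto).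
    assert (Ht : NoDup t) by (eapply NoDup_app_remove_r; eauto).
    assert (Hi : incl t l)
      by (intros x Hx; apply (Permutation_in _ (Permutation_sym Hp)), in_or_app; auto).
    destruct (subsets_Permutation_exists l t Hl Ht Hi) as [S [HS PS]].
    exists S. rewrite <- Hlt. split; auto.
    apply in_flat_map. exists t. split; [apply In_perms, PS|].
    apply in_map_iff. exists r. split; [apply firstn_skipn|]. apply In_perms.
    apply NoDup_Permutation; [apply NoDup_ldiff; auto | eapply NoDup_app_remove_l; eauto |].
    intro x. rewrite (In_ldiff_Permutation l S t x PS), In_ldiff. split.
    + intros [X1 X2]. apply (Permutation_in _ Hp), in_app_or in X1 as [X1|X1]; tauto.
    + intro X. split.
      * apply (Permutation_in _ (Permutation_sym Hp)), in_or_app; auto.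
      * intro Xt. exact (NoDup_app_disjoint _ _ _ Hs Xt X).
Qed.

Lemma NoDup_split_perms l k : NoDup l -> NoDup (split_perms l k).
Proof.
  intro Hl. unfold split_perms.
  assert (Hprefix : forall t1 t2 r1 r2 : list nat,
             length t1 = length t2 -> t1 ++ r1 = t2 ++ r2 -> t1 = t2).
  { intros t1 t2 r1 r2 L E. rewrite <- (firstn_length_app t1 r1), E, L.
    apply firstn_length_app. }
  apply NoDup_flat_map_disjoint; [apply NoDup_subsets; auto | |].
  - intros S HS. apply NoDup_flat_map_disjoint.
    + apply NoDup_perms. eapply NoDup_subsets_elem; eauto.
    + intros t _. apply FinFun.Injective_map_NoDup.
      * intros u v E. eapply app_inv_head; eauto.
      * apply NoDup_perms, NoDup_ldiff; auto.
    + intros t1 t2 y H1 H2 Y1 Y2.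
      apply in_map_iff in Y1 as [r1 [<- _]]. apply in_map_iff in Y2 as [r2 [E _]].
      apply In_perms, Permutation_length in H1, H2.
      apply (Hprefix t1 t2 r1 r2); auto; lia.
  - intros S1 S2 y H1 H2 Y1 Y2.
    apply in_flat_map in Y1 as [t1 [T1 Y1]]. apply in_map_iff in Y1 as [r1 [<- _]].
    apply in_flat_map in Y2 as [t2 [T2 Y2]]. apply in_map_iff in Y2 as [r2 [E _]].
    apply In_perms in T1, T2.
    assert (t1 = t2).
    { apply (Hprefix t1 t2 r1 r2); auto.
      rewrite <- (Permutation_length T1), <- (Permutation_length T2),
        (subsets_length _ _ _ H1), (subsets_length _ _ _ H2); auto. }
    subst t2. eapply subsets_eq_of_members; eauto. intro x.
    split; intro Hx.
    + exact (Permutation_in _ (Permutation_sym T2) (Permutation_in _ T1 Hx)).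
    + exact (Permutation_in _ (Permutation_sym T1) (Permutation_in _ T2 Hx)).
Qed.

Lemma sumR_perms_split (F : list nat -> R) l k :
  NoDup l -> (k <= length l)%nat ->
  sumR (map F (perms l)) =
  sumR (map (fun S => sumR (map (fun t =>
          sumR (map (fun r => F (t ++ r)) (perms (ldiff l S)))) (perms S))) (subsets l k)).
Proof.
  intros Hl Hk. transitivity (sumR (map F (split_perms l k))).
  - apply sumR_Permutation, Permutation_map, NoDup_Permutation.
    + apply NoDup_perms; auto.
    + apply NoDup_split_perms; auto.
    + intro s. rewrite In_perms, In_split_perms; tauto.
  - unfold split_perms. rewrite sumR_flat_map. apply sumR_map_ext_in. intros S _.
    rewrite sumR_flat_map. apply sumR_map_ext_in. intros t _. rewrite map_map. auto.
Qed.

Lemma sumR_perms_first (F : list nat -> R) l :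
  NoDup l -> l <> [] ->
  sumR (map F (perms l)) =
  sumR (map (fun x => sumR (map (fun r => F (x :: r)) (perms (ldiff l [x])))) l).
Proof.
  intros Hl Hne. destruct l as [|y l']; [congruence|].
  rewrite (sumR_perms_split F (y :: l') 1) by (auto; simpl; lia).
  rewrite subsets_1, map_map. apply sumR_map_ext_in. intros x _. simpl. ring.
Qed.

(** * Weighted top-set probabilities *)

Definition wsum (w : nat -> R) (S : list nat) : R := sumR (map w S).

Fixpoint wtop (w : nat -> R) (beta : R) (s : list nat) : R :=
  match s with
  | [] => 1
  | x :: s' => w x / (wsum w s + beta) * wtop w beta s'
  end.

(** [wedge w T β] is the probability that the items of [T] are the top
    [|T|] choices of a PL ranking with weights [w], when the remaining items
    have total weight [β]. *)
Definition wedge (w : nat -> R) (T : list nat) (beta : R) : R :=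
  sumR (map (wtop w beta) (perms T)).

Lemma top_prob_wtop th B s : top_prob th B s = wtop (wt th) (wsum (wt th) B) s.
Proof. induction s; simpl; auto. rewrite IHs. auto. Qed.

Lemma edge_prob_wedge th T B : edge_prob th T B = wedge (wt th) T (wsum (wt th) B).
Proof. unfold edge_prob, wedge. f_equal. apply map_ext. intro; apply top_prob_wtop. Qed.

Lemma wsum_app w a b : wsum w (a ++ b) = wsum w a + wsum w b.
Proof. unfold wsum. rewrite map_app, sumR_app. auto. Qed.

Lemma wsum_Permutation w a b : Permutation a b -> wsum w a = wsum w b.
Proof. intro; unfold wsum; apply sumR_Permutation, Permutation_map; auto. Qed.

Lemma wsum_scal c w s : wsum (fun x => c * w x) s = c * wsum w s.
Proof. apply sumR_scal_l. Qed.

Lemma wsum_le w w' s : (forall x, In x s -> w x <= w' x) -> wsum w s <= wsum w' s.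
Proof. apply sumR_le. Qed.

Lemma wsum_le_length w S A : (forall x, In x S -> w x <= A) -> wsum w S <= A * INR (length S).
Proof.
  intro H. rewrite Rmult_comm, <- sumR_const with (L := S). apply sumR_le. auto.
Qed.

Lemma wsum_ext w w' s : (forall x, In x s -> w x = w' x) -> wsum w s = wsum w' s.
Proof. apply sumR_map_ext_in. Qed.

Lemma wtop_ext w w' b s : (forall x, In x s -> w x = w' x) -> wtop w b s = wtop w' b s.
Proof.
  induction s as [|x s IH]; simpl; intros H; auto.
  rewrite (wsum_ext w w' (x :: s)), H, IH by auto. auto.
Qed.

Lemma wedge_ext w w' T b : (forall x, In x T -> w x = w' x) -> wedge w T b = wedge w' T b.
Proof.
  intro H. apply sumR_map_ext_in. intros s Hs. apply wtop_ext.
  intros x Hx. apply H. apply In_perms in Hs. eapply Permutation_in; [symmetry|]; eauto.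
Qed.

Lemma wedge_Permutation w T T' b : NoDup T -> Permutation T T' -> wedge w T b = wedge w T' b.
Proof.
  intros HT P. apply sumR_Permutation, Permutation_map, NoDup_Permutation.
  - apply NoDup_perms; auto.
  - apply NoDup_perms. eapply Permutation_NoDup; eauto.
  - intro s; rewrite !In_perms. split; intro H.
    + exact (Permutation_trans (Permutation_sym P) H).
    + exact (Permutation_trans P H).
Qed.

Lemma wedge_nil w b : wedge w [] b = 1.
Proof. unfold wedge; simpl. ring. Qed.

Lemma wedge_rec w T b : NoDup T -> T <> [] ->
  wedge w T b = sumR (map (fun x => w x / (wsum w T + b) * wedge w (ldiff T [x]) b) T).
Proof.
  intros HT Hne. unfold wedge at 1. rewrite sumR_perms_first by auto.
  apply sumR_map_ext_in. intros x Hx. unfold wedge. rewrite <- sumR_scal_l.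
  apply sumR_map_ext_in. intros r Hr. simpl. do 3 f_equal.
  apply wsum_Permutation. apply In_perms in Hr.
  eapply Permutation_trans; [|symmetry; apply Permutation_ldiff1; eauto].
  constructor; symmetry; auto.
Qed.

Section PositiveWeights.

Variable w : nat -> R.
Hypothesis w_pos : forall x, 0 < w x.

Lemma wsum_ge0 s : 0 <= wsum w s.
Proof. apply sumR_ge0. intros; left; auto. Qed.

Lemma wsum_cons_pos x s : 0 < wsum w (x :: s).
Proof. pose proof (w_pos x). pose proof (wsum_ge0 s). unfold wsum in *; simpl. lra. Qed.

Lemma wsum_pos s : s <> [] -> 0 < wsum w s.
Proof. destruct s; [congruence|]. intros _. apply wsum_cons_pos. Qed.

Lemma wsum_ldiff_le l A : wsum w (ldiff l A) <= wsum w l.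
Proof.
  rewrite (wsum_Permutation w _ _ (Permutation_filter_split (fun y => inb y A) l)), wsum_app.
  pose proof (wsum_ge0 (filter (fun y => inb y A) l)). unfold ldiff. lra.
Qed.

Lemma wtop_pos b s : 0 <= b -> 0 < wtop w b s.
Proof.
  intro Hb. induction s as [|x s IH]; simpl; [lra|].
  apply Rmult_lt_0_compat; auto. apply Rdiv_lt_0_compat; auto.
  pose proof (wsum_cons_pos x s). lra.
Qed.

Lemma wedge_ge_wtop T b : 0 <= b -> wtop w b T <= wedge w T b.
Proof.
  intro Hb. apply (sumR_ge_term (wtop w b)); [|apply perms_refl].
  intros; left; apply wtop_pos; auto.
Qed.

Lemma wedge_pos T b : 0 <= b -> 0 < wedge w T b.
Proof. intro Hb. eapply Rlt_le_trans; [apply wtop_pos | apply wedge_ge_wtop]; eauto. Qed.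

Lemma wedge_rec_at T b t : 0 <= b -> NoDup T -> In t T ->
  wedge w T b * (wsum w T + b) =
  w t * wedge w (ldiff T [t]) b + sumR (map (fun x => w x * wedge w (ldiff T [x]) b) (ldiff T [t])).
Proof.
  intros Hb HT Ht.
  assert (Hne : T <> []) by (intro E; subst; contradiction).
  assert (0 < wsum w T + b) by (pose proof (wsum_pos T Hne); lra).
  rewrite (wedge_rec w T b HT Hne), Rmult_comm, <- sumR_scal_l.
  rewrite (sumR_Permutation _ _ (Permutation_map _ (Permutation_ldiff1 T t HT Ht))). simpl.
  f_equal; [field; lra|]. apply sumR_map_ext_in; intros; field; lra.
Qed.

Lemma wedge_le1 T b : 0 <= b -> NoDup T -> wedge w T b <= 1.
Proof.
  intros Hb. induction T as [T IH] using (Wf_nat.induction_ltof1 _ (@length nat)). intro HT.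
  destruct (list_eq_dec Nat.eq_dec T []) as [->|Hne]; [rewrite wedge_nil; lra|].
  assert (HS : 0 < wsum w T) by (apply wsum_pos; auto).
  rewrite wedge_rec by auto.
  apply Rle_trans with (sumR (map (fun x => / (wsum w T + b) * w x) T)).
  - apply sumR_le. intros x Hx. rewrite <- (Rmult_1_r (/ _ * w x)).
    unfold Rdiv. rewrite (Rmult_comm (w x)). apply Rmult_le_compat_l.
    + left. apply Rmult_lt_0_compat; [apply Rinv_0_lt_compat; lra | auto].
    + apply IH; [|apply NoDup_ldiff; auto].
      unfold Wf_nat.ltof. pose proof (length_ldiff1 T x HT Hx). lia.
  - rewrite sumR_scal_l. fold (wsum w T).
    apply (Rmult_le_reg_l (wsum w T + b)); [lra|]. field_simplify; lra.
Qed.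

Lemma wedge_scal c T b : 0 < c -> 0 <= b ->
  wedge (fun x => c * w x) T (c * b) = wedge w T b.
Proof.
  intros Hc Hb. apply sumR_map_ext_in. intros s _.
  induction s as [|x s IH]; simpl; auto. rewrite IH, wsum_scal.
  pose proof (wsum_cons_pos x s). field. split; [lra|]. apply Rgt_not_eq. nra.
Qed.

Lemma wtop_bottom_antitone b b' s : 0 <= b -> b <= b' -> wtop w b' s <= wtop w b s.
Proof.
  intros Hb Hbb. induction s as [|x s IH]; simpl; [lra|].
  pose proof (wsum_cons_pos x s). pose proof (w_pos x).
  pose proof (wtop_pos b' s ltac:(lra)).
  apply Rmult_le_compat; auto.
  - left; apply Rdiv_lt_0_compat; lra.
  - lra.
  - unfold Rdiv. apply Rmult_le_compat_l; [lra|]. apply Rinv_le_contravar; lra.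
Qed.

Lemma wedge_bottom_antitone T b b' : 0 <= b -> b <= b' -> wedge w T b' <= wedge w T b.
Proof. intros. apply sumR_le. intros; apply wtop_bottom_antitone; auto. Qed.

(** Only the first factor of each [wtop] sees the total mass, so
    [wedge * (mass of T + β)] is still antitone in [β]. *)
Lemma wedge_bottom_antitone_scaled T b b' : 0 <= b -> b <= b' -> T <> [] ->
  wedge w T b' * (wsum w T + b') <= wedge w T b * (wsum w T + b).
Proof.
  intros Hb Hbb Hne. unfold wedge.
  rewrite Rmult_comm, <- sumR_scal_l, Rmult_comm, <- sumR_scal_l.
  apply sumR_le. intros s Hs. apply In_perms in Hs.
  destruct s as [|x s]; [apply Permutation_sym, Permutation_nil in Hs; congruence|].
  rewrite (wsum_Permutation w _ _ Hs). simpl.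
  pose proof (wsum_cons_pos x s). pose proof (w_pos x).
  pose proof (wtop_bottom_antitone b b' s Hb Hbb).
  pose proof (wtop_pos b' s ltac:(lra)).
  replace ((wsum w (x :: s) + b') * (w x / (wsum w (x :: s) + b') * wtop w b' s))
    with (w x * wtop w b' s) by (field; lra).
  replace ((wsum w (x :: s) + b) * (w x / (wsum w (x :: s) + b) * wtop w b s))
    with (w x * wtop w b s) by (field; lra).
  apply Rmult_le_compat_l; lra.
Qed.

Lemma wtop_lower_bound b s a K : 0 <= b -> 0 < a ->
  (forall x, In x s -> a <= w x) -> wsum w s + b <= K -> (a / K) ^ length s <= wtop w b s.
Proof.
  intros Hb Ha. induction s as [|x s IH]; simpl; intros Hw HK; [lra|].
  pose proof (wsum_cons_pos x s). pose proof (w_pos x).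
  assert (HK' : wsum w s + b <= K) by (unfold wsum in *; simpl in HK; lra).
  apply Rmult_le_compat.
  - left; apply Rdiv_lt_0_compat; lra.
  - apply pow_le. left; apply Rdiv_lt_0_compat; lra.
  - unfold Rdiv. apply Rmult_le_compat; try lra.
    + left; apply Rinv_0_lt_compat; lra.
    + apply Hw; left; auto.
    + apply Rinv_le_contravar; lra.
  - apply IH; auto; intros; apply Hw; right; auto.
Qed.

Lemma wedge_lower_bound T b a K : 0 <= b -> 0 < a ->
  (forall x, In x T -> a <= w x) -> wsum w T + b <= K -> (a / K) ^ length T <= wedge w T b.
Proof.
  intros. eapply Rle_trans; [apply wtop_lower_bound | apply wedge_ge_wtop]; eauto.
Qed.

End PositiveWeights.

Lemma wedge_singleton w t b : 0 < w t + b -> wedge w [t] b = w t / (w t + b).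
Proof.
  intro H. unfold wedge. simpl. unfold wsum; simpl.
  rewrite Rplus_0_r. field. lra.
Qed.

Lemma wedge_remove_identity w T t beta :
  (forall x, 0 < w x) -> 0 <= beta -> NoDup T -> In t T -> ldiff T [t] <> [] ->
  (wsum w T + beta) * (wedge w (ldiff T [t]) beta - wedge w T beta) =
  sumR (map (fun x => w x * (wedge w (ldiff (ldiff T [t]) [x]) beta - wedge w (ldiff T [x]) beta))
            (ldiff T [t])).
Proof.
  intros w_pos Hb HT Ht Hne. set (T' := ldiff T [t]) in *.
  assert (NT' : NoDup T') by (apply NoDup_ldiff; auto).
  assert (SW : wsum w T = w t + wsum w T')
    by (apply (wsum_Permutation w _ _ (Permutation_ldiff1 T t HT Ht))).
  assert (ET := wedge_rec_at w w_pos T beta t Hb HT Ht). fold T' in ET.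
  assert (ET' : wedge w T' beta * (wsum w T' + beta) =
                sumR (map (fun x => w x * wedge w (ldiff T' [x]) beta) T')).
  { rewrite (wedge_rec w T' beta NT' Hne), Rmult_comm, <- sumR_scal_l.
    pose proof (wsum_pos w w_pos T' Hne).
    apply sumR_map_ext_in. intros x _. field. lra. }
  rewrite (sumR_map_ext_in _ (fun x => w x * wedge w (ldiff T' [x]) beta -
                                       w x * wedge w (ldiff T [x]) beta)) by (intros; ring).
  rewrite sumR_sub, <- ET'. rewrite SW in ET |- *. lra.
Qed.

Lemma wedge_update_identity w w' T t beta :
  (forall x, 0 < w x) -> (forall x, 0 < w' x) -> (forall x, x <> t -> w' x = w x) ->
  0 <= beta -> NoDup T -> In t T ->
  (wedge w' T beta - wedge w T beta) * (wsum w' T + beta) =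
  (w' t - w t) * (wedge w (ldiff T [t]) beta - wedge w T beta) +
  sumR (map (fun x => w x * (wedge w' (ldiff T [x]) beta - wedge w (ldiff T [x]) beta))
            (ldiff T [t])).
Proof.
  intros w_pos w'_pos w'_agree Hb HT Ht. set (T' := ldiff T [t]).
  assert (agree_T' : forall x, In x T' -> w' x = w x).
  { intros x Hx. apply w'_agree. intros ->. apply In_ldiff in Hx as [_ H]. apply H; left; auto. }
  assert (SW : forall v, wsum v T = v t + wsum v T')
    by (intro v; apply (wsum_Permutation v _ _ (Permutation_ldiff1 T t HT Ht))).
  assert (SW' : wsum w' T' = wsum w T') by (apply wsum_ext; auto).
  assert (E' : wedge w' T' beta = wedge w T' beta) by (apply wedge_ext; auto).
  assert (E1 := wedge_rec_at w w_pos T beta t Hb HT Ht). fold T' in E1.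
  assert (E2 := wedge_rec_at w' w'_pos T beta t Hb HT Ht). fold T' in E2.
  rewrite E', (sumR_map_ext_in (fun x => w' x * _) (fun x => w x * wedge w' (ldiff T [x]) beta))
    in E2 by (intros x Hx; rewrite agree_T'; auto).
  rewrite (sumR_map_ext_in _ (fun x => w x * wedge w' (ldiff T [x]) beta -
                                       w x * wedge w (ldiff T [x]) beta)) by (intros; ring).
  rewrite sumR_sub, Rmult_minus_distr_r, E2.
  replace (wedge w T beta * (wsum w' T + beta))
    with (wedge w T beta * (wsum w T + beta) + (w' t - w t) * wedge w T beta)
    by (rewrite !SW, SW'; ring).
  rewrite E1. ring.
Qed.

Lemma one_sub_wedge_singleton w t a K beta :
  0 < w t -> 0 < a -> a <= beta -> w t + beta <= K -> a / K <= 1 - wedge w [t] beta.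
Proof.
  intros Ht Ha Hb HK. rewrite wedge_singleton by lra.
  replace (1 - w t / (w t + beta)) with (beta / (w t + beta)) by (field; lra).
  unfold Rdiv. apply Rmult_le_compat; [lra | left; apply Rinv_0_lt_compat; lra | lra |].
  apply Rinv_le_contravar; lra.
Qed.

Section WeightGains.

Variables (w : nat -> R) (a K beta : R).
Hypothesis w_pos : forall x, 0 < w x.
Hypothesis a_pos : 0 < a.
Hypothesis a_le_beta : a <= beta.

Lemma wedge_remove_gain_step T t p : NoDup T -> In t T -> ldiff T [t] <> [] ->
  (forall x, In x T -> a <= w x) -> wsum w T + beta <= K -> 0 <= p ->
  (forall x, In x (ldiff T [t]) ->
     p <= wedge w (ldiff (ldiff T [t]) [x]) beta - wedge w (ldiff T [x]) beta) ->
  a / K * p <= wedge w (ldiff T [t]) beta - wedge w T beta.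
Proof.
  intros HT Ht Hne Hw HK Hp Hx. set (T' := ldiff T [t]) in *.
  assert (Hx0 : exists x0, In x0 T')
    by (destruct T' as [|x0 ?]; [congruence | exists x0; left; auto]).
  destruct Hx0 as [x0 Hx0].
  assert (Tx0 : In x0 T) by (apply In_ldiff in Hx0; tauto).
  pose proof (Hw x0 Tx0). pose proof (w_pos t). pose proof (Hw t Ht).
  pose proof (wsum_ge0 w w_pos T).
  set (F := fun x => w x * (wedge w (ldiff T' [x]) beta - wedge w (ldiff T [x]) beta)).
  assert (S0 : w x0 * p <= sumR (map F T')).
  { apply Rle_trans with (F x0); [unfold F; apply Rmult_le_compat_l; auto; lra|].
    apply sumR_ge_term; auto. intros x Hx'. pose proof (Hx x Hx'). pose proof (w_pos x).
    unfold F. nra. }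
  apply (Rmult_le_reg_l (wsum w T + beta)); [lra|].
  pose proof (wedge_remove_identity w T t beta w_pos ltac:(lra) HT Ht Hne) as ID.
  fold T' F in ID. rewrite ID.
  eapply Rle_trans; [|exact S0].
  apply Rle_trans with (a * p); [|nra].
  replace (a * p) with (K * (a / K * p)) by (field; lra).
  assert (0 <= a / K) by (left; apply Rdiv_lt_0_compat; lra).
  apply Rmult_le_compat_r; nra.
Qed.

Lemma wedge_remove_gain T t : NoDup T -> In t T ->
  (forall x, In x T -> a <= w x) -> wsum w T + beta <= K ->
  (a / K) ^ length T <= wedge w (ldiff T [t]) beta - wedge w T beta.
Proof.
  revert t. induction T as [T IH] using (Wf_nat.induction_ltof1 _ (@length nat)).
  intros t HT Ht Hw HK. set (T' := ldiff T [t]).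
  assert (LT : length T = S (length T')) by (apply length_ldiff1; auto).
  assert (SW : wsum w T = w t + wsum w T')
    by (apply (wsum_Permutation w _ _ (Permutation_ldiff1 T t HT Ht))).
  assert (HT' : 0 <= wsum w T') by (apply wsum_ge0; auto).
  pose proof (w_pos t). pose proof (Hw t Ht).
  destruct (list_eq_dec Nat.eq_dec T' []) as [E0|Hne].
  - assert (PT := Permutation_ldiff1 T t HT Ht). fold T' in PT. rewrite E0 in PT.
    rewrite LT, E0, wedge_nil, (wedge_Permutation w T [t]), pow_1 by auto.
    apply one_sub_wedge_singleton; auto.
    rewrite SW, E0 in HK. unfold wsum in HK; simpl in HK. lra.
  - rewrite LT. apply wedge_remove_gain_step; auto.
    { apply pow_le; left; apply Rdiv_lt_0_compat; lra. }
    intros x Hx. apply In_ldiff in Hx as [Tx xt].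
    assert (Lx : length T' = length (ldiff T [x])).
    { pose proof (length_ldiff1 T x HT Tx). lia. }
    rewrite Lx, ldiff_comm. apply IH.
    + unfold Wf_nat.ltof. pose proof (length_ldiff1 T x HT Tx). lia.
    + apply NoDup_ldiff; auto.
    + apply In_ldiff. split; auto. intros [E|[]]. apply xt. left; auto.
    + intros y Hy; apply Hw, (incl_ldiff T [x] y Hy).
    + pose proof (wsum_ldiff_le w w_pos T [x]). lra.
Qed.

Section UpdateOne.

Variables (w' : nat -> R) (t : nat).
Hypothesis w'_pos : forall x, 0 < w' x.
Hypothesis w'_agree : forall x, x <> t -> w' x = w x.
Hypothesis w_le_w'_t : w t <= w' t.

Lemma wedge_update_mono T : NoDup T ->
  (forall x, In x T -> a <= w x) -> wsum w' T + beta <= K -> wedge w T beta <= wedge w' T beta.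
Proof.
  induction T as [T IH] using (Wf_nat.induction_ltof1 _ (@length nat)). intros HT Hw HK.
  destruct (in_dec Nat.eq_dec t T) as [Ht|Ht].
  2:{ right. symmetry. apply wedge_ext. intros x Hx. apply w'_agree. intros ->. contradiction. }
  assert (wsum w T <= wsum w' T).
  { apply wsum_le. intros x _. destruct (Nat.eq_dec x t) as [->|E]; [lra|].
    rewrite (w'_agree x E). lra. }
  assert (GAP := wedge_remove_gain T t HT Ht Hw ltac:(lra)).
  assert (0 <= (a / K) ^ length T).
  { apply pow_le. pose proof (wsum_ge0 w' w'_pos T). left. apply Rdiv_lt_0_compat; lra. }
  assert (Tail : 0 <= sumR (map (fun x => w x * (wedge w' (ldiff T [x]) beta -
                                                wedge w (ldiff T [x]) beta)) (ldiff T [t]))).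
  { apply sumR_ge0. intros x Hx. apply In_ldiff in Hx as [Tx _].
    pose proof (w_pos x). apply Rmult_le_pos; [lra|].
    assert (wedge w (ldiff T [x]) beta <= wedge w' (ldiff T [x]) beta); [|lra].
    apply IH.
    - unfold Wf_nat.ltof. pose proof (length_ldiff1 T x HT Tx). lia.
    - apply NoDup_ldiff; auto.
    - intros y Hy. apply Hw, (incl_ldiff T [x] y Hy).
    - pose proof (wsum_ldiff_le w' w'_pos T [x]). lra. }
  pose proof (wedge_update_identity w w' T t beta w_pos w'_pos w'_agree ltac:(lra) HT Ht) as ID.
  pose proof (wsum_ge0 w' w'_pos T).
  assert (0 <= (wedge w' T beta - wedge w T beta) * (wsum w' T + beta)) by nra.
  assert (0 <= wedge w' T beta - wedge w T beta); [|lra].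
  apply (Rmult_le_reg_r (wsum w' T + beta)); lra.
Qed.

Lemma wedge_update_gain T : NoDup T -> In t T ->
  (forall x, In x T -> a <= w x) -> wsum w' T + beta <= K ->
  (w' t - w t) * (a / K) ^ length T / (wsum w' T + beta) <= wedge w' T beta - wedge w T beta.
Proof.
  intros HT Ht Hw HK.
  assert (wsum w T <= wsum w' T).
  { apply wsum_le. intros x _. destruct (Nat.eq_dec x t) as [->|E]; [lra|].
    rewrite (w'_agree x E). lra. }
  assert (GAP := wedge_remove_gain T t HT Ht Hw ltac:(lra)).
  assert (Tail : 0 <= sumR (map (fun x => w x * (wedge w' (ldiff T [x]) beta -
                                                wedge w (ldiff T [x]) beta)) (ldiff T [t]))).
  { apply sumR_ge0. intros x Hx. apply In_ldiff in Hx as [Tx _].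
    pose proof (w_pos x). apply Rmult_le_pos; [lra|].
    assert (wedge w (ldiff T [x]) beta <= wedge w' (ldiff T [x]) beta); [|lra].
    apply wedge_update_mono.
    - apply NoDup_ldiff; auto.
    - intros y Hy. apply Hw, (incl_ldiff T [x] y Hy).
    - pose proof (wsum_ldiff_le w' w'_pos T [x]). lra. }
  pose proof (wedge_update_identity w w' T t beta w_pos w'_pos w'_agree ltac:(lra) HT Ht) as ID.
  pose proof (wsum_ge0 w' w'_pos T).
  apply (Rmult_le_reg_r (wsum w' T + beta)); [lra|].
  unfold Rdiv. rewrite Rmult_assoc, Rinv_l, Rmult_1_r by lra. nra.
Qed.

End UpdateOne.

End WeightGains.

(** Raising the weights of the top-set one item at a time. *)
Lemma wedge_monotone w w' T beta a K :
  (forall x, 0 < w x) -> (forall x, 0 < w' x) -> 0 < a -> a <= beta -> NoDup T ->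
  (forall x, In x T -> a <= w x) -> (forall x, In x T -> w x <= w' x) ->
  wsum w' T + beta <= K -> wedge w T beta <= wedge w' T beta.
Proof.
  intros w_pos w'_pos a_pos Hb HT Hw Hww HK.
  set (mix := fun L x => if inb x L then w' x else w x).
  assert (mix_pos : forall L x, 0 < mix L x) by (intros; unfold mix; destruct (inb x L); auto).
  assert (mix_bounds : forall L x, In x T -> w x <= mix L x <= w' x)
    by (intros; unfold mix; destruct (inb x L); split; auto; lra).
  assert (Hmix : forall L, wedge w T beta <= wedge (mix L) T beta).
  { induction L as [|t L IH].
    - right. apply wedge_ext. intros x _. auto.
    - eapply Rle_trans; [exact IH|].
      destruct (in_dec Nat.eq_dec t T) as [Ht|Ht].
      + apply (wedge_update_mono (mix L) a K beta (mix_pos L) a_pos Hb (mix (t :: L)) t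
                 (mix_pos (t :: L))); auto.
        * intros x E. unfold mix, inb; simpl.
          destruct (Nat.eqb x t) eqn:Ex; simpl; auto. apply Nat.eqb_eq in Ex. contradiction.
        * unfold mix, inb; simpl. rewrite Nat.eqb_refl. simpl. apply mix_bounds; auto.
        * intros x Hx. eapply Rle_trans; [apply Hw | apply mix_bounds]; auto.
        * eapply Rle_trans; [|exact HK]. apply Rplus_le_compat_r, wsum_le.
          intros x Hx. apply mix_bounds; auto.
      + right. apply wedge_ext. intros x Hx. unfold mix, inb; simpl.
        destruct (Nat.eqb x t) eqn:E; simpl; auto. apply Nat.eqb_eq in E. subst; contradiction. }
  eapply Rle_trans; [exact (Hmix T)|]. right. apply wedge_ext. intros x Hx. unfold mix.
  replace (inb x T) with true by (symmetry; apply inb_true; auto). auto.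
Qed.

Section WeightShift.

Variables (w w' : nat -> R) (a A K g : R) (T B : list nat).
Hypothesis w_pos : forall x, 0 < w x.
Hypothesis w'_pos : forall x, 0 < w' x.
Hypothesis a_pos : 0 < a.
Hypothesis NoDup_T : NoDup T.
Hypothesis NoDup_B : NoDup B.
Hypothesis T_nonempty : T <> [].
Hypothesis B_nonempty : B <> [].
Hypothesis g_nonneg : 0 <= g.
Hypothesis w_bounds : forall x, In x (T ++ B) -> a <= w x <= A.
Hypothesis w'_bounds : forall x, In x (T ++ B) -> a <= w' x <= A.
Hypothesis K_ge : A * INR (length T) + A * INR (length B) <= K.
Hypothesis top_up : forall x, In x T -> w x <= w' x.
Hypothesis bottom_down : forall x, In x B -> w' x <= w x.

Let in_T x : In x T -> In x (T ++ B). Proof. intro; apply in_or_app; auto. Qed.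
Let in_B x : In x B -> In x (T ++ B). Proof. intro; apply in_or_app; auto. Qed.

Let sum_bound v : (forall x, In x (T ++ B) -> v x <= A) ->
  wsum v T <= A * INR (length T) /\ wsum v B <= A * INR (length B).
Proof. intro H. split; apply wsum_le_length; auto. Qed.

Let mass_lb v : (forall x, In x (T ++ B) -> a <= v x) -> a <= wsum v B.
Proof.
  intro H. assert (Hj : exists j, In j B)
    by (destruct B as [|j ?]; [congruence | exists j; left; auto]).
  destruct Hj as [j Hj].
  apply Rle_trans with (v j); [apply H; auto|].
  apply (sumR_ge_term v B j); auto.
  intros x Hx. specialize (H x (in_B x Hx)). lra.
Qed.

Let top_mono : wedge w T (wsum w B) <= wedge w' T (wsum w B).
Proof.
  destruct (sum_bound w' (fun x Hx => proj2 (w'_bounds x Hx))).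
  destruct (sum_bound w (fun x Hx => proj2 (w_bounds x Hx))).
  apply (wedge_monotone w w' T (wsum w B) a K); auto.
  - apply mass_lb. intros; apply w_bounds; auto.
  - intros; apply w_bounds; auto.
  - lra.
Qed.

Lemma wedge_gain_top i : In i T -> g <= w' i - w i ->
  wedge w T (wsum w B) + g * (a / K) ^ length T / K <= wedge w' T (wsum w' B).
Proof.
  intros Hi Hg. set (w1 := fun x => if Nat.eq_dec x i then w' i else w x).
  assert (w1_pos : forall x, 0 < w1 x) by (intro x; unfold w1; destruct Nat.eq_dec; auto).
  assert (w1_T : forall x, In x T -> w x <= w1 x <= w' x).
  { intros x Hx. pose proof (top_up x Hx).
    unfold w1. destruct Nat.eq_dec; [subst x|]; lra. }
  destruct (sum_bound w (fun x Hx => proj2 (w_bounds x Hx))).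
  destruct (sum_bound w' (fun x Hx => proj2 (w'_bounds x Hx))).
  assert (W1 : wsum w1 T <= wsum w' T) by (apply wsum_le; intros; apply w1_T; auto).
  assert (Hb : a <= wsum w B) by (apply mass_lb; intros; apply w_bounds; auto).
  assert (G1 := wedge_update_gain w a K (wsum w B) w_pos a_pos Hb w1 i w1_pos
                  ltac:(intros x E; unfold w1; destruct Nat.eq_dec; congruence)
                  ltac:(unfold w1; destruct Nat.eq_dec; [lra | congruence])
                  T NoDup_T Hi ltac:(intros; apply w_bounds; auto) ltac:(lra)).
  replace (w1 i) with (w' i) in G1 by (unfold w1; destruct Nat.eq_dec; congruence).
  assert (M1 : wedge w1 T (wsum w B) <= wedge w' T (wsum w B)).
  { apply (wedge_monotone w1 w' T (wsum w B) a K); auto.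
    - intros x Hx. pose proof (w1_T x Hx). pose proof (w_bounds x (in_T x Hx)). lra.
    - intros; apply w1_T; auto.
    - lra. }
  assert (M2 : wedge w' T (wsum w B) <= wedge w' T (wsum w' B))
    by (apply wedge_bottom_antitone; [auto | apply wsum_ge0; auto | apply wsum_le; auto]).
  assert (Kpos : 0 < K) by (pose proof (wsum_ge0 w w_pos T); lra).
  assert (0 <= (a / K) ^ length T) by (apply pow_le; left; apply Rdiv_lt_0_compat; lra).
  assert (g * (a / K) ^ length T / K <=
          (w' i - w i) * (a / K) ^ length T / (wsum w1 T + wsum w B)); [|lra].
  assert (0 < wsum w1 T + wsum w B) by (pose proof (wsum_ge0 w1 w1_pos T); lra).
  unfold Rdiv. apply Rmult_le_compat; [nra | left; apply Rinv_0_lt_compat; lra | nra |].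
  apply Rinv_le_contravar; lra.
Qed.

Lemma wedge_gain_bottom j : In j B -> g <= w j - w' j ->
  wedge w T (wsum w B) + g * (a / K) ^ length T / K <= wedge w' T (wsum w' B).
Proof.
  intros Hj Hg.
  destruct (sum_bound w (fun x Hx => proj2 (w_bounds x Hx))).
  destruct (sum_bound w' (fun x Hx => proj2 (w'_bounds x Hx))).
  assert (Hb' : a <= wsum w' B) by (apply mass_lb; intros; apply w'_bounds; auto).
  assert (Hbb : wsum w' B + g <= wsum w B).
  { rewrite (wsum_Permutation w _ _ (Permutation_ldiff1 B j NoDup_B Hj)),
            (wsum_Permutation w' _ _ (Permutation_ldiff1 B j NoDup_B Hj)).
    assert (wsum w' (ldiff B [j]) <= wsum w (ldiff B [j]))
      by (apply wsum_le; intros x Hx; apply bottom_down, (incl_ldiff B [j] x Hx)).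
    unfold wsum in *; simpl. lra. }
  assert (Kpos : 0 < K) by (pose proof (wsum_ge0 w' w'_pos T); lra).
  assert (LB : (a / K) ^ length T <= wedge w' T (wsum w B)).
  { apply wedge_lower_bound; auto; [lra | intros; apply w'_bounds, in_T; auto | lra]. }
  set (E1 := wedge w' T (wsum w B)) in *. set (E2 := wedge w' T (wsum w' B)).
  set (S' := wsum w' T) in *.
  assert (S'0 : 0 <= S') by (apply wsum_ge0; auto).
  assert (Hscaled : E1 * (S' + wsum w B) <= E2 * (S' + wsum w' B))
    by (apply wedge_bottom_antitone_scaled; auto; lra).
  assert (E1 <= E2) by (apply wedge_bottom_antitone; auto; lra).
  assert (0 <= (a / K) ^ length T) by (apply pow_le; left; apply Rdiv_lt_0_compat; lra).
  assert (KEY : (a / K) ^ length T * g <= (E2 - E1) * K).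
  { apply Rle_trans with (E1 * (wsum w B - wsum w' B)); [apply Rmult_le_compat; lra|].
    apply Rle_trans with ((E2 - E1) * (S' + wsum w' B)); [nra|].
    apply Rmult_le_compat_l; lra. }
  assert (g * (a / K) ^ length T / K <= E2 - E1).
  { apply (Rmult_le_reg_r K); [lra|]. unfold Rdiv.
    rewrite Rmult_assoc, Rinv_l, Rmult_1_r by lra. lra. }
  pose proof top_mono. lra.
Qed.

End WeightShift.

(** * Identifiability of the edge probabilities *)

Lemma exp_le x y : x <= y -> exp x <= exp y.
Proof. intros [H|H]; [left; apply exp_increasing; auto | subst; lra]. Qed.

Lemma ln_le x y : 0 < x -> x <= y -> ln x <= ln y.
Proof. intros Hx [H|H]; [left; apply ln_increasing; auto | subst; lra]. Qed.

Lemma Rabs_le_inv x y : Rabs x <= y -> -y <= x <= y.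
Proof. unfold Rabs; destruct (Rcase_abs x); intros; lra. Qed.

Lemma pow_le1_antitone r n m : 0 <= r <= 1 -> (n <= m)%nat -> r ^ m <= r ^ n.
Proof.
  intros Hr Hnm. replace m with (n + (m - n))%nat by lia. rewrite pow_add.
  rewrite <- (Rmult_1_r (r ^ n)) at 2. apply Rmult_le_compat_l; [apply pow_le; lra|].
  rewrite <- (pow1 (m - n)). apply pow_incr. lra.
Qed.

Lemma exp_sub_ge a x y h : 0 <= a -> 0 <= h -> a <= exp y -> x + h <= y ->
  a * (1 - exp (- h)) <= exp y - exp x.
Proof.
  intros Ha Hh Hy Hxy.
  replace (exp x) with (exp y * exp (x - y)) by (rewrite <- exp_plus; f_equal; ring).
  assert (exp (x - y) <= exp (- h)) by (apply exp_le; lra).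
  assert (exp (- h) <= 1) by (rewrite <- exp_0; apply exp_le; lra).
  nra.
Qed.

(** Every weight [e^(τ + θ*_x)] or [e^(θ_x)] met below lies in [[wlo b, whi b]]
    since [|τ| <= 2b]; [wcap b d] bounds the total weight of [d] items. *)
Definition wlo (b : R) : R := exp (- (3 * b)).
Definition whi (b : R) : R := exp (3 * b).
Definition wcap (b : R) (d : nat) : R := whi b * INR d.
Definition rho (b : R) (d : nat) : R := wlo b / wcap b d.
Definition edge_gap (b : R) (d : nat) (eps : R) : R :=
  wlo b * (1 - exp (- (eps / 2))) * rho b d ^ d / wcap b d.

Lemma wlo_pos b : 0 < wlo b.
Proof. apply exp_pos. Qed.

Lemma wcap_pos b d : (1 <= d)%nat -> 0 < wcap b d.
Proof. intro. apply Rmult_lt_0_compat; [apply exp_pos | apply lt_0_INR; lia]. Qed.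

Lemma rho_pos b d : (1 <= d)%nat -> 0 < rho b d.
Proof. intro. apply Rdiv_lt_0_compat; [apply wlo_pos | apply wcap_pos; auto]. Qed.

Lemma rho_le1 b d : 0 <= b -> (1 <= d)%nat -> rho b d <= 1.
Proof.
  intros Hb Hd. unfold rho, wcap.
  assert (wlo b <= whi b) by (apply exp_le; lra).
  pose proof (wlo_pos b). pose proof (exp_pos (3 * b)). fold (whi b) in *.
  assert (1 <= INR d) by (apply (le_INR 1); auto).
  apply (Rmult_le_reg_r (whi b * INR d)); [nra|].
  unfold Rdiv. rewrite Rmult_assoc, Rinv_l by nra. nra.
Qed.

Lemma rho_pow_bounds b d : 0 <= b -> (1 <= d)%nat -> 0 < rho b d ^ d <= 1.
Proof.
  intros Hb Hd. pose proof (rho_pos b d Hd). pose proof (rho_le1 b d Hb Hd).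
  split; [apply pow_lt; auto|]. rewrite <- (pow1 d). apply pow_incr. lra.
Qed.

Lemma rho_pow_le b d n : 0 <= b -> (1 <= d)%nat -> (n <= d)%nat -> rho b d ^ d <= rho b d ^ n.
Proof.
  intros Hb Hd Hn. apply pow_le1_antitone; auto.
  pose proof (rho_pos b d Hd). pose proof (rho_le1 b d Hb Hd). lra.
Qed.

Lemma edge_gap_pos b d eps : (1 <= d)%nat -> 0 < eps -> 0 < edge_gap b d eps.
Proof.
  intros Hd He. unfold edge_gap. pose proof (rho_pos b d Hd). pose proof (wlo_pos b).
  assert (exp (- (eps / 2)) < 1) by (rewrite <- exp_0; apply exp_increasing; lra).
  apply Rdiv_lt_0_compat; [|apply wcap_pos; auto].
  apply Rmult_lt_0_compat; [apply Rmult_lt_0_compat; lra | apply pow_lt; auto].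
Qed.

Lemma wt_pos th x : 0 < wt th x.
Proof. apply exp_pos. Qed.

Lemma exp_wbounds u b : Rabs u <= 3 * b -> wlo b <= exp u <= whi b.
Proof. intro H. apply Rabs_le_inv in H. split; apply exp_le; lra. Qed.

Lemma wt_bounds th b x : Rabs (th x) <= b -> wlo b <= wt th x <= whi b.
Proof. intro H. apply exp_wbounds. pose proof (Rabs_pos (th x)). lra. Qed.

Lemma edge_prob_lower_bound th b d T B :
  (1 <= d)%nat -> 0 <= b -> (forall x, (x < d)%nat -> Rabs (th x) <= b) ->
  NoDup (T ++ B) -> (forall x, In x (T ++ B) -> (x < d)%nat) ->
  rho b d ^ d <= edge_prob th T B.
Proof.
  intros Hd Hb Hth HTB Hx.
  assert (LTB : (length (T ++ B) <= d)%nat).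
  { rewrite <- (length_seq d 0). apply NoDup_incl_length; auto.
    intros y Hy. apply in_seq. specialize (Hx y Hy). lia. }
  rewrite length_app in LTB. rewrite edge_prob_wedge.
  eapply Rle_trans; [apply (rho_pow_le b d (length T)); auto; lia|].
  apply wedge_lower_bound; [intro; apply exp_pos | apply wsum_ge0; intro; apply exp_pos
                           | apply wlo_pos | |].
  - intros y Hy. apply wt_bounds, Hth, Hx, in_or_app; auto.
  - rewrite <- wsum_app. eapply Rle_trans.
    + apply wsum_le_length. intros y Hy. apply (wt_bounds th b y (Hth y (Hx y Hy))).
    + unfold wcap. apply Rmult_le_compat_l; [left; apply exp_pos|].
      apply le_INR. rewrite length_app. lia.
Qed.

Lemma edge_prob_le1 th T B : NoDup T -> edge_prob th T B <= 1.
Proof.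
  intro HT. rewrite edge_prob_wedge.
  apply wedge_le1; [intro; apply exp_pos | apply wsum_ge0; intro; apply exp_pos | auto].
Qed.

Lemma edge_prob_shift ths tau T B :
  edge_prob ths T B =
  wedge (fun x => exp (tau + ths x)) T (wsum (fun x => exp (tau + ths x)) B).
Proof.
  rewrite edge_prob_wedge.
  rewrite (wedge_ext (fun x => exp (tau + ths x)) (fun x => exp tau * wt ths x)),
    (wsum_ext (fun x => exp (tau + ths x)) (fun x => exp tau * wt ths x))
    by (intros; apply exp_plus).
  rewrite wsum_scal, wedge_scal; auto using exp_pos.
  - intro; apply exp_pos.
  - apply wsum_ge0; intro; apply exp_pos.
Qed.

Lemma edge_gap_le b d eps n : 0 <= b -> (1 <= d)%nat -> 0 < eps -> (n <= d)%nat ->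
  edge_gap b d eps <= wlo b * (1 - exp (- (eps / 2))) * (wlo b / wcap b d) ^ n / wcap b d.
Proof.
  intros Hb Hd He Hn. unfold edge_gap, Rdiv. apply Rmult_le_compat_r.
  - left. apply Rinv_0_lt_compat, wcap_pos; auto.
  - assert (exp (- (eps / 2)) <= 1) by (rewrite <- exp_0; apply exp_le; lra).
    pose proof (wlo_pos b). apply Rmult_le_compat_l; [nra|]. apply rho_pow_le; auto.
Qed.

(** Rescaling [θ*] by [e^τ] leaves edge probabilities unchanged, and then
    every weight of [T] grows and every weight of [B] shrinks on the way to
    [θ], one of them by a definite amount. *)
Lemma edge_prob_gap th ths b d eps T B tau i j :
  (1 <= d)%nat -> 0 < eps ->
  (forall x, (x < d)%nat -> Rabs (th x) <= b) ->
  (forall x, (x < d)%nat -> Rabs (ths x) <= b) ->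
  (forall x, In x (T ++ B) -> (x < d)%nat) -> NoDup (T ++ B) ->
  (length T + length B <= d)%nat -> In i T -> In j B ->
  (forall x, In x T -> tau <= th x - ths x) ->
  (forall x, In x B -> th x - ths x <= tau) ->
  (th i - ths i) - (th j - ths j) > eps -> Rabs tau <= 2 * b ->
  edge_prob ths T B + edge_gap b d eps <= edge_prob th T B.
Proof.
  intros Hd Heps Hth Hths HTBd HTB Hlen Hi Hj HT_tau HB_tau Hij Htau.
  assert (Hb : 0 <= b) by (pose proof (Rabs_pos tau); lra).
  set (a := wlo b). set (K := wcap b d).
  set (w := fun x => exp (tau + ths x)). set (w' := wt th).
  assert (w_bounds : forall x, In x (T ++ B) -> a <= w x <= whi b).
  { intros x Hx. apply exp_wbounds. eapply Rle_trans; [apply Rabs_triang|].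
    pose proof (Hths x (HTBd x Hx)). lra. }
  assert (w'_bounds : forall x, In x (T ++ B) -> a <= w' x <= whi b)
    by (intros x Hx; apply wt_bounds, Hth, HTBd, Hx).
  assert (K_ge : whi b * INR (length T) + whi b * INR (length B) <= K).
  { unfold K, wcap. rewrite <- Rmult_plus_distr_l, <- plus_INR.
    apply Rmult_le_compat_l; [left; apply exp_pos | apply le_INR; auto]. }
  assert (top_up : forall x, In x T -> w x <= w' x)
    by (intros x Hx; apply exp_le; pose proof (HT_tau x Hx); lra).
  assert (bottom_down : forall x, In x B -> w' x <= w x)
    by (intros x Hx; apply exp_le; pose proof (HB_tau x Hx); lra).
  assert (g0 : 0 <= a * (1 - exp (- (eps / 2)))).
  { assert (exp (- (eps / 2)) <= 1) by (rewrite <- exp_0; apply exp_le; lra).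
    pose proof (wlo_pos b). unfold a. nra. }
  rewrite (edge_prob_shift ths tau), edge_prob_wedge.
  eapply Rle_trans; [apply Rplus_le_compat_l, (edge_gap_le b d eps (length T)); auto; lia|].
  fold a K.
  assert (NT : NoDup T) by (eapply NoDup_app_remove_r; eauto).
  assert (NB : NoDup B) by (eapply NoDup_app_remove_l; eauto).
  assert (Tne : T <> []) by (intro E; rewrite E in Hi; contradiction).
  assert (Bne : B <> []) by (intro E; rewrite E in Hj; contradiction).
  assert (a_pos : 0 < a) by apply wlo_pos.
  assert (w_pos : forall x, 0 < w x) by (intro; apply exp_pos).
  assert (w'_pos : forall x, 0 < w' x) by (intro; apply exp_pos).
  destruct (Rle_dec (eps / 2) (th i - ths i - tau)) as [C|C].
  - apply (wedge_gain_top w w' a (whi b) K _ T B) with (i := i); auto.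
    apply exp_sub_ge; [lra | lra | | unfold w; lra]. apply w'_bounds, in_or_app; auto.
  - apply (wedge_gain_bottom w w' a (whi b) K _ T B) with (j := j); auto.
    apply exp_sub_ge; [lra | lra | | unfold w; lra]. apply w_bounds, in_or_app; auto.
Qed.

(** * The expected log-likelihood gap *)

Lemma pl_prob_cons th x s : pl_prob th (x :: s) = wt th x / sumw th (x :: s) * pl_prob th s.
Proof.
  destruct s as [|y s]; [|reflexivity].
  simpl. unfold sumw; simpl. field. pose proof (wt_pos th x); lra.
Qed.

Lemma pl_prob_pos th s : 0 < pl_prob th s.
Proof.
  induction s as [|x s IH]; [simpl; lra|]. rewrite pl_prob_cons.
  apply Rmult_lt_0_compat; auto. apply Rdiv_lt_0_compat; [apply wt_pos|].
  apply (wsum_cons_pos (wt th) (wt_pos th)).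
Qed.

Lemma pl_prob_app th t r : pl_prob th (t ++ r) = wtop (wt th) (wsum (wt th) r) t * pl_prob th r.
Proof.
  induction t as [|x t IH]; [simpl; ring|].
  change ((x :: t) ++ r) with (x :: (t ++ r)). rewrite pl_prob_cons, IH.
  simpl wtop.
  replace (sumw th (x :: t ++ r)) with (wsum (wt th) (x :: t) + wsum (wt th) r)
    by (rewrite <- wsum_app; reflexivity).
  ring.
Qed.

Lemma sum_pl_prob_perms th l : NoDup l -> sumR (map (pl_prob th) (perms l)) = 1.
Proof.
  induction l as [l IH] using (Wf_nat.induction_ltof1 _ (@length nat)). intro Hl.
  destruct (list_eq_dec Nat.eq_dec l []) as [->|Hne]; [simpl; ring|].
  assert (Hpos : 0 < wsum (wt th) l) by (apply wsum_pos; auto; apply wt_pos).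
  rewrite sumR_perms_first by auto.
  transitivity (sumR (map (fun x => / wsum (wt th) l * wt th x) l)).
  - apply sumR_map_ext_in. intros x Hx.
    rewrite (sumR_map_ext_in _ (fun r => wt th x / wsum (wt th) l * pl_prob th r)).
    + rewrite sumR_scal_l, IH; [unfold Rdiv; ring | | apply NoDup_ldiff; auto].
      unfold Wf_nat.ltof. pose proof (length_ldiff1 l x Hl Hx). lia.
    + intros r Hr. rewrite pl_prob_cons. f_equal. f_equal.
      change (sumw th (x :: r)) with (wsum (wt th) (x :: r)).
      apply wsum_Permutation. apply In_perms in Hr.
      eapply Permutation_trans; [|symmetry; apply Permutation_ldiff1; eauto].
      constructor; symmetry; auto.
  - rewrite sumR_scal_l. fold (wsum (wt th) l). field. lra.
Qed.

Definition rb_gap (ths th : nat -> R) (M : nat) (m : list nat) (s : list nat) : R :=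
  rb_user ths M m s - rb_user th M m s.

Definition rb_divergence (ths th : nat -> R) (M : nat) (m : list nat) (l : list nat) : R :=
  sumR (map (fun s => pl_prob ths s * rb_gap ths th M m s) (perms l)).

Definition block_prob (th : nat -> R) (l S : list nat) : R :=
  wedge (wt th) S (wsum (wt th) (ldiff l S)).

Lemma block_prob_pos th l S : 0 < block_prob th l S.
Proof. apply wedge_pos; [apply wt_pos | apply wsum_ge0, wt_pos]. Qed.

Lemma sum_block_prob th l k :
  NoDup l -> (k <= length l)%nat -> sumR (map (block_prob th l) (subsets l k)) = 1.
Proof.
  intros Hl Hk. rewrite <- (sum_pl_prob_perms th l Hl), (sumR_perms_split _ l k) by auto.
  symmetry. apply sumR_map_ext_in. intros S HS. unfold block_prob, wedge.
  apply sumR_map_ext_in. intros t Ht.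
  rewrite (sumR_map_ext_in _ (fun r => wtop (wt th) (wsum (wt th) (ldiff l S)) t * pl_prob th r)).
  - rewrite sumR_scal_l, sum_pl_prob_perms by (apply NoDup_ldiff; auto). ring.
  - intros r Hr. rewrite pl_prob_app. do 2 f_equal.
    apply wsum_Permutation. apply In_perms in Hr. symmetry; auto.
Qed.

Lemma rb_divergence_cons ths th M ma m l : NoDup l -> (ma <= length l)%nat ->
  rb_divergence ths th M (ma :: m) l =
  sumR (map (fun S => block_prob ths l S *
                      ((if Nat.leb ma M
                        then ln (block_prob ths l S) - ln (block_prob th l S) else 0)
                       + rb_divergence ths th M m (ldiff l S))) (subsets l ma)).
Proof.
  intros Hl Hk. unfold rb_divergence at 1. rewrite (sumR_perms_split _ l ma) by auto.
  apply sumR_map_ext_in. intros S HS.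
  assert (NS : NoDup S) by (eapply NoDup_subsets_elem; eauto).
  assert (LS : length S = ma) by (eapply subsets_length; eauto).
  set (c := if Nat.leb ma M then ln (block_prob ths l S) - ln (block_prob th l S) else 0).
  set (top := fun t => wtop (wt ths) (wsum (wt ths) (ldiff l S)) t).
  transitivity (sumR (map (fun t => top t * (c + rb_divergence ths th M m (ldiff l S))) (perms S))).
  - apply sumR_map_ext_in. intros t Ht. apply In_perms in Ht.
    assert (Lt : length t = ma) by (rewrite <- (Permutation_length Ht); auto).
    unfold rb_divergence.
    rewrite (sumR_map_ext_in _ (fun r => top t * (c * pl_prob ths r) +
                                         top t * (pl_prob ths r * rb_gap ths th M m r))).
    + rewrite sumR_add, !sumR_scal_l, sum_pl_prob_perms by (apply NoDup_ldiff; auto). ring.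
    + intros r Hr. apply In_perms in Hr.
      assert (SWr : forall th0, wsum (wt th0) r = wsum (wt th0) (ldiff l S))
        by (intro; apply wsum_Permutation; symmetry; auto).
      rewrite pl_prob_app, SWr. fold (top t).
      unfold rb_gap. simpl rb_user. rewrite <- Lt, firstn_length_app, skipn_length_app, Lt.
      assert (EC : (if Nat.leb ma M then ln (edge_prob ths t r) else 0) -
                   (if Nat.leb ma M then ln (edge_prob th t r) else 0) = c).
      { unfold c, block_prob. rewrite !edge_prob_wedge, !SWr.
        rewrite (wedge_Permutation (wt ths) S t), (wedge_Permutation (wt th) S t) by auto.
        destruct (Nat.leb ma M); ring. }
      rewrite <- EC. ring.
  - unfold block_prob at 1, wedge, top.
    rewrite (Rmult_comm _ (c + _)), <- sumR_scal_l. apply sumR_map_ext_in; intros; ring.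
Qed.

Lemma ln_le_sub1 y : 0 < y -> ln y <= y - 1.
Proof. intro Hy. pose proof (exp_ineq1_le (ln y)). rewrite exp_ln in H; auto. lra. Qed.

Lemma kl_term_ge p q : 0 < p -> 0 < q -> p - q <= p * (ln p - ln q).
Proof.
  intros Hp Hq. pose proof (ln_le_sub1 (q / p) ltac:(apply Rdiv_lt_0_compat; auto)) as H.
  unfold Rdiv in H. rewrite ln_mult, ln_Rinv in H by (auto; apply Rinv_0_lt_compat; auto).
  assert (q * / p * p = q) by (field; lra). nra.
Qed.

(** The strictly positive margin in [ln y <= y - 1] once [y >= 1 + δ]. *)
Definition kl_margin (dl : R) : R := dl - ln (1 + dl).

Lemma kl_margin_pos dl : 0 < dl -> 0 < kl_margin dl.
Proof.
  intro H. unfold kl_margin. assert (Hln : ln (1 + dl) <> 0) by (apply ln_neq_0; lra).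
  pose proof (exp_ineq1 _ Hln) as Hexp. rewrite exp_ln in Hexp by lra. lra.
Qed.

Lemma kl_term_ge_margin p q dl : 0 < p -> 0 < q -> 0 < dl -> p * (1 + dl) <= q ->
  p - q + p * kl_margin dl <= p * (ln p - ln q).
Proof.
  intros Hp Hq Hd Hpq. set (x := q / p). set (c := 1 + dl).
  assert (xpos : 0 < x) by (apply Rdiv_lt_0_compat; auto).
  assert (cx : c <= x).
  { unfold x, c. apply (Rmult_le_reg_r p); auto. unfold Rdiv.
    rewrite Rmult_assoc, Rinv_l, Rmult_1_r by lra. lra. }
  assert (lnx : ln x = ln q - ln p)
    by (unfold x, Rdiv; rewrite ln_mult, ln_Rinv by (auto; apply Rinv_0_lt_compat; auto); ring).
  assert (L1 : ln (x / c) <= x / c - 1) by (apply ln_le_sub1, Rdiv_lt_0_compat; unfold c in *; lra).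
  unfold Rdiv in L1.
  rewrite ln_mult, ln_Rinv in L1 by (try apply Rinv_0_lt_compat; unfold c in *; lra).
  assert (L2 : x * / c - 1 <= x - c).
  { replace (x * / c - 1) with ((x - c) / c) by (field; unfold c; lra).
    apply (Rmult_le_reg_r c); [unfold c; lra|].
    unfold Rdiv; rewrite Rmult_assoc, Rinv_l, Rmult_1_r by (unfold c; lra).
    unfold c in *. nra. }
  assert (Ec : c = 1 + dl) by reflexivity.
  assert (Hlnx : ln x <= x - 1 - kl_margin dl) by (unfold kl_margin; rewrite <- Ec; lra).
  assert (p * x = q) by (unfold x; field; lra).
  rewrite lnx in Hlnx. nra.
Qed.

Section KullbackLeibler.

Variables (L : list (list nat)) (p q : list nat -> R).
Hypothesis pq_pos : forall S, In S L -> 0 < p S /\ 0 < q S.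
Hypothesis p_sum : sumR (map p L) = 1.
Hypothesis q_sum : sumR (map q L) = 1.

Lemma kl_ge0 : 0 <= sumR (map (fun S => p S * (ln (p S) - ln (q S))) L).
Proof.
  apply Rle_trans with (sumR (map (fun S => p S - q S) L)); [rewrite sumR_sub; lra|].
  apply sumR_le. intros S HS. destruct (pq_pos S HS). apply kl_term_ge; auto.
Qed.

Lemma kl_ge_margin S0 dl : In S0 L -> 0 < dl -> p S0 * (1 + dl) <= q S0 ->
  p S0 * kl_margin dl <= sumR (map (fun S => p S * (ln (p S) - ln (q S))) L).
Proof.
  intros HS0 Hd Hpq.
  assert (Hm : sumR (map (fun S => p S - q S) L) + p S0 * kl_margin dl <=
               sumR (map (fun S => p S * (ln (p S) - ln (q S))) L)).
  { apply (sumR_le_margin _ (fun S => p S - q S) L S0); auto.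
    - intros S HS. destruct (pq_pos S HS). apply kl_term_ge; auto.
    - destruct (pq_pos S0 HS0). apply kl_term_ge_margin; auto. }
  rewrite sumR_sub in Hm. lra.
Qed.

End KullbackLeibler.

Definition block_kl (ths th : nat -> R) (l : list nat) (k : nat) : R :=
  sumR (map (fun S => block_prob ths l S * (ln (block_prob ths l S) - ln (block_prob th l S)))
            (subsets l k)).

Lemma rb_divergence_cons_split ths th M ma m l : NoDup l -> (ma <= length l)%nat ->
  rb_divergence ths th M (ma :: m) l =
  (if Nat.leb ma M then block_kl ths th l ma else 0) +
  sumR (map (fun S => block_prob ths l S * rb_divergence ths th M m (ldiff l S)) (subsets l ma)).
Proof.
  intros Hl Hk. rewrite rb_divergence_cons by auto.
  rewrite (sumR_map_ext_in _ (fun S =>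
     (if Nat.leb ma M then block_prob ths l S * (ln (block_prob ths l S) - ln (block_prob th l S))
      else 0) + block_prob ths l S * rb_divergence ths th M m (ldiff l S)))
    by (intros; destruct (Nat.leb ma M); ring).
  rewrite sumR_add. f_equal. unfold block_kl.
  destruct (Nat.leb ma M); auto. rewrite sumR_const. ring.
Qed.

Lemma block_kl_ge0 ths th l k : NoDup l -> (k <= length l)%nat -> 0 <= block_kl ths th l k.
Proof.
  intros Hl Hk. apply kl_ge0; [intros; split; apply block_prob_pos | |];
    apply sum_block_prob; auto.
Qed.

Lemma rb_divergence_ge0 ths th M m l :
  NoDup l -> (list_sum m <= length l)%nat -> 0 <= rb_divergence ths th M m l.
Proof.
  revert l. induction m as [|ma m IH]; intros l Hl Hs.
  - apply sumR_ge0. intros. unfold rb_gap. simpl. lra.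
  - simpl in Hs. rewrite rb_divergence_cons_split by (auto; lia).
    apply Rplus_le_le_0_compat.
    + destruct (Nat.leb ma M); [apply block_kl_ge0; auto; lia | lra].
    + apply sumR_ge0. intros S HS. apply Rmult_le_pos; [left; apply block_prob_pos|].
      apply IH; [apply NoDup_ldiff; auto|]. rewrite (length_ldiff_subset l ma) by auto. lia.
Qed.

Lemma rb_divergence_ge_kl ths th M ma m l : NoDup l -> (list_sum (ma :: m) <= length l)%nat ->
  (ma <= M)%nat -> block_kl ths th l ma <= rb_divergence ths th M (ma :: m) l.
Proof.
  intros Hl Hs HM. simpl in Hs. rewrite rb_divergence_cons_split by (auto; lia).
  apply Nat.leb_le in HM. rewrite HM.
  assert (0 <= sumR (map (fun S => block_prob ths l S * rb_divergence ths th M m (ldiff l S))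
                         (subsets l ma))); [|lra].
  apply sumR_ge0. intros S HS. apply Rmult_le_pos; [left; apply block_prob_pos|].
  apply rb_divergence_ge0; [apply NoDup_ldiff; auto|].
  rewrite (length_ldiff_subset l ma) by auto. lia.
Qed.

Lemma rb_divergence_ge_tail ths th M ma m l S0 : NoDup l -> (list_sum (ma :: m) <= length l)%nat ->
  In S0 (subsets l ma) ->
  block_prob ths l S0 * rb_divergence ths th M m (ldiff l S0) <= rb_divergence ths th M (ma :: m) l.
Proof.
  intros Hl Hs HS0. simpl in Hs. rewrite rb_divergence_cons_split by (auto; lia).
  assert (0 <= if Nat.leb ma M then block_kl ths th l ma else 0)
    by (destruct (Nat.leb ma M); [apply block_kl_ge0; auto; lia | lra]).
  assert (block_prob ths l S0 * rb_divergence ths th M m (ldiff l S0) <=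
          sumR (map (fun S => block_prob ths l S * rb_divergence ths th M m (ldiff l S))
                    (subsets l ma))); [|lra].
  apply (sumR_ge_term (fun S => block_prob ths l S * rb_divergence ths th M m (ldiff l S))); auto.
  intros S HS. apply Rmult_le_pos; [left; apply block_prob_pos|].
  apply rb_divergence_ge0; [apply NoDup_ldiff; auto|].
  rewrite (length_ldiff_subset l ma) by auto. lia.
Qed.

Lemma block_prob_edge_prob th l S : block_prob th l S = edge_prob th S (ldiff l S).
Proof. symmetry. apply edge_prob_wedge. Qed.

Lemma block_prob_lower_bound ths b d l k S :
  (1 <= d)%nat -> 0 <= b -> (forall x, (x < d)%nat -> Rabs (ths x) <= b) ->
  NoDup l -> (forall x, In x l -> (x < d)%nat) -> In S (subsets l k) ->
  rho b d ^ d <= block_prob ths l S.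
Proof.
  intros Hd Hb Hths Hl Hld HS. rewrite block_prob_edge_prob.
  pose proof (Permutation_subset_ldiff l k S Hl HS) as P.
  apply edge_prob_lower_bound; auto.
  - eapply Permutation_NoDup; eauto.
  - intros x Hx. apply Hld. apply (Permutation_in _ (Permutation_sym P) Hx).
Qed.

Fixpoint first_kept (M : nat) (m : list nat) : nat :=
  match m with
  | [] => 0
  | a :: m' => if Nat.leb a M then a else first_kept M m'
  end.

Fixpoint skipped_before (M : nat) (m : list nat) : nat :=
  match m with
  | [] => 0
  | a :: m' => if Nat.leb a M then 0 else a + skipped_before M m'
  end.

Lemma first_kept_spec M m : (exists a, In a m /\ (a <= M)%nat) ->
  In (first_kept M m) m /\ (skipped_before M m + first_kept M m <= list_sum m)%nat.
Proof.
  induction m as [|a m IH]; intros [c [Hc HcM]]; [contradiction|].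
  simpl. destruct (Nat.leb a M) eqn:E.
  - split; [left; auto | lia].
  - destruct Hc as [->|Hc]; [apply Nat.leb_nle in E; lia|].
    destruct IH as [H1 H2]; eauto. split; [right; auto | lia].
Qed.

Lemma block_kl_ge_margin ths th b d l T B dl :
  (1 <= d)%nat -> 0 <= b -> 0 < dl -> (forall x, (x < d)%nat -> Rabs (ths x) <= b) ->
  NoDup l -> (forall x, In x l -> (x < d)%nat) ->
  NoDup (T ++ B) -> incl (T ++ B) l -> (length T + length B = length l)%nat ->
  edge_prob ths T B + dl <= edge_prob th T B ->
  rho b d ^ d * kl_margin dl <= block_kl ths th l (length T).
Proof.
  intros Hd Hb Hdl Hths Hl Hld HTB Hincl Hlen Hgap.
  assert (PTB : Permutation (T ++ B) l)
    by (apply NoDup_Permutation_bis; auto; rewrite length_app; lia).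
  assert (NT : NoDup T) by (eapply NoDup_app_remove_r; eauto).
  assert (NB : NoDup B) by (eapply NoDup_app_remove_l; eauto).
  assert (Hincl_T : incl T l) by (intros x Hx; apply Hincl, in_or_app; auto).
  destruct (subsets_Permutation_exists l T Hl NT Hincl_T)
    as [S0 [HS0 PS0]].
  assert (PB : Permutation (ldiff l S0) B).
  { apply NoDup_Permutation; [apply NoDup_ldiff; auto | auto |].
    intro x. rewrite (In_ldiff_Permutation l S0 T x PS0), In_ldiff. split.
    - intros [X1 X2]. apply (Permutation_in _ (Permutation_sym PTB)), in_app_or in X1. tauto.
    - intro XB. split; [apply Hincl, in_or_app; auto|].
      intro XT. exact (NoDup_app_disjoint _ _ _ HTB XT XB). }
  assert (EQ : forall th0, block_prob th0 l S0 = edge_prob th0 T B).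
  { intro th0. rewrite block_prob_edge_prob, !edge_prob_wedge, (wsum_Permutation _ _ _ PB).
    apply wedge_Permutation; [apply (NoDup_subsets_elem l (length T)) | ]; auto. }
  assert (Hle1 : block_prob ths l S0 <= 1) by (rewrite EQ; apply edge_prob_le1; auto).
  assert (Hlb : rho b d ^ d <= block_prob ths l S0) by (eapply block_prob_lower_bound; eauto).
  pose proof (kl_margin_pos dl Hdl).
  eapply Rle_trans; [apply Rmult_le_compat_r; [lra | exact Hlb]|].
  apply kl_ge_margin; auto.
  - intros; split; apply block_prob_pos.
  - apply sum_block_prob; auto. rewrite <- Hlen. lia.
  - apply sum_block_prob; auto. rewrite <- Hlen. lia.
  - pose proof (block_prob_pos ths l S0) as Hpos. rewrite !EQ in *. nra.
Qed.

Lemma subset_avoiding_exists l k X :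
  NoDup l -> NoDup X -> incl X l -> (k + length X <= length l)%nat ->
  exists S0, In S0 (subsets l k) /\ incl X (ldiff l S0).
Proof.
  intros Hl HX Hincl Hlen.
  set (U := ldiff l X).
  assert (PX : Permutation (filter (fun y => inb y X) l) X).
  { apply NoDup_Permutation; [apply NoDup_filter; auto | auto |].
    intro x. rewrite filter_In, inb_true. split; [tauto | auto]. }
  assert (LU : length l = (length X + length U)%nat).
  { rewrite (Permutation_length (Permutation_filter_split (fun y => inb y X) l)), length_app.
    rewrite (Permutation_length PX). auto. }
  set (S1 := firstn k U).
  assert (LS1 : length S1 = k) by (unfold S1; rewrite length_firstn; lia).
  assert (NU : NoDup U) by (apply NoDup_ldiff; auto).
  assert (NS1 : NoDup S1).
  { unfold S1. rewrite <- (firstn_skipn k U) in NU. eapply NoDup_app_remove_r; eauto. }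
  assert (S1U : incl S1 U).
  { intros x Hx. rewrite <- (firstn_skipn k U). apply in_or_app; auto. }
  destruct (subsets_Permutation_exists l S1 Hl NS1
              (fun x Hx => incl_ldiff l X x (S1U x Hx))) as [S0 [HS0 PS0]].
  exists S0. rewrite LS1 in HS0. split; auto.
  intros x Hx. apply (In_ldiff_Permutation l S0 S1 x PS0), In_ldiff. split; auto.
  intro XS. apply S1U, In_ldiff in XS. tauto.
Qed.

Section DivergenceMargin.

Variables (ths th : nat -> R) (b : R) (d M : nat) (dl : R).
Hypothesis d_pos : (1 <= d)%nat.
Hypothesis b_ge0 : 0 <= b.
Hypothesis dl_pos : 0 < dl.
Hypothesis ths_bounded : forall x, (x < d)%nat -> Rabs (ths x) <= b.

Lemma rb_divergence_ge_margin m : forall l T B,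
  (exists a, In a m /\ (a <= M)%nat) ->
  NoDup l -> (forall x, In x l -> (x < d)%nat) -> (list_sum m <= length l)%nat ->
  NoDup (T ++ B) -> incl (T ++ B) l -> length T = first_kept M m ->
  (length T + length B + skipped_before M m = length l)%nat ->
  edge_prob ths T B + dl <= edge_prob th T B ->
  (rho b d ^ d) ^ length m * kl_margin dl <= rb_divergence ths th M m l.
Proof.
  destruct (rho_pow_bounds b d b_ge0 d_pos) as [r0 r1].
  pose proof (kl_margin_pos dl dl_pos).
  induction m as [|ma m IH]; intros l T B [a [Ha HaM]] Hl Hld Hs HTB Hincl HT HL Hgap;
    [contradiction|].
  set (r := rho b d ^ d) in *. simpl in HT, HL, Hs. simpl length. rewrite <- tech_pow_Rmult.
  assert (0 <= r ^ length m <= 1)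
    by (split; [apply pow_le; lra | rewrite <- (pow1 (length m)); apply pow_incr; lra]).
  destruct (Nat.leb ma M) eqn:Ek.
  - apply Nat.leb_le in Ek. subst ma.
    eapply Rle_trans; [|apply rb_divergence_ge_kl; auto; simpl; lia].
    eapply Rle_trans; [|apply (block_kl_ge_margin ths th b d l T B dl); auto; lia].
    fold r. apply Rmult_le_compat_r; nra.
  - destruct (subset_avoiding_exists l ma (T ++ B) Hl HTB Hincl ltac:(rewrite length_app; lia))
      as [S0 [HS0 Havoid]].
    eapply Rle_trans; [|apply (rb_divergence_ge_tail ths th M ma m l S0); auto; simpl; lia].
    rewrite Rmult_assoc. apply Rmult_le_compat; [lra | nra | |].
    + eapply block_prob_lower_bound; eauto.
    + apply (IH (ldiff l S0) T B); auto.
      * destruct Ha as [<-|Ha]; [apply Nat.leb_nle in Ek; lia | eauto].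
      * apply NoDup_ldiff; auto.
      * intros x Hx. apply Hld, (incl_ldiff l S0 x Hx).
      * rewrite (length_ldiff_subset l ma) by auto. lia.
      * rewrite (length_ldiff_subset l ma) by auto. lia.
Qed.

End DivergenceMargin.

Lemma StronglySorted_app_rel {A} (Rel : A -> A -> Prop) l1 l2 x y :
  StronglySorted Rel (l1 ++ l2) -> In x l1 -> In y l2 -> Rel x y.
Proof.
  induction l1 as [|a l1 IH]; simpl; intros H Hx Hy; [contradiction|].
  inversion H as [|? ? H1 H2]; subst. destruct Hx as [->|Hx]; auto.
  rewrite Forall_forall in H2. apply H2, in_or_app; auto.
Qed.

Lemma exists_argmax (f : nat -> R) l :
  l <> [] -> exists x0, In x0 l /\ forall x, In x l -> f x <= f x0.
Proof.
  induction l as [|y l IH]; intro H; [congruence|].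
  destruct (list_eq_dec Nat.eq_dec l []) as [->|Hne].
  - exists y. split; [left; auto | intros x [->|[]]; lra].
  - destruct (IH Hne) as [x0 [H1 H2]]. destruct (Rle_dec (f x0) (f y)).
    + exists y. split; [left; auto|]. intros x [->|Hx]; [lra | specialize (H2 x Hx); lra].
    + exists x0. split; [right; auto|]. intros x [->|Hx]; [lra | auto].
Qed.

Lemma exists_argmin (f : nat -> R) l :
  l <> [] -> exists x0, In x0 l /\ forall x, In x l -> f x0 <= f x.
Proof.
  intro H. destruct (exists_argmax (fun x => - f x) l H) as [x0 [H1 H2]].
  exists x0. split; auto. intros x Hx. specialize (H2 x Hx). lra.
Qed.

Lemma sorted_Permutation_exists (f : nat -> R) l :
  exists S, Permutation S l /\ StronglySorted (fun x y => f y <= f x) S.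
Proof.
  induction l as [l IH] using (Wf_nat.induction_ltof1 _ (@length nat)).
  destruct (list_eq_dec Nat.eq_dec l []) as [->|Hne]; [exists []; split; constructor|].
  destruct (exists_argmax f l Hne) as [x0 [Hx0 Hmax]].
  apply in_split in Hx0 as [l1 [l2 ->]].
  destruct (IH (l1 ++ l2)) as [S [PS SS]].
  { unfold Wf_nat.ltof. rewrite !length_app. simpl. lia. }
  exists (x0 :: S). split; [apply Permutation_cons_app; auto|].
  constructor; auto. apply Forall_forall. intros y Hy.
  apply Hmax. apply (Permutation_in _ PS), in_app_or in Hy.
  apply in_or_app. simpl. tauto.
Qed.

(** With zero total, the extremes straddle [0] and so are more than [ε]
    apart when one entry exceeds [ε] in absolute value. *)
Lemma spread_gt (f : nat -> R) d eps x i j : (x < d)%nat ->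
  sumR (map f (seq 0 d)) = 0 ->
  (forall y, (y < d)%nat -> f y <= f i) -> (forall y, (y < d)%nat -> f j <= f y) ->
  Rabs (f x) > eps -> f i - f j > eps.
Proof.
  intros Hx Hsum Hi Hj Hfar.
  assert (Hne : seq 0 d <> []) by (destruct d; [lia | simpl; congruence]).
  assert (j_nonpos : f j <= 0).
  { destruct (Rle_dec (f j) 0) as [|C]; auto. exfalso.
    assert (0 < sumR (map f (seq 0 d))); [|lra].
    apply sumR_pos; auto. intros y Hy. apply in_seq in Hy. pose proof (Hj y ltac:(lia)). lra. }
  assert (i_nonneg : 0 <= f i).
  { destruct (Rle_dec 0 (f i)) as [|C]; auto. exfalso.
    assert (Hneg : 0 < sumR (map (fun y => -1 * f y) (seq 0 d))).
    { apply sumR_pos; auto. intros y Hy. apply in_seq in Hy. pose proof (Hi y ltac:(lia)). lra. }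
    rewrite sumR_scal_l in Hneg. lra. }
  pose proof (Hi x Hx). pose proof (Hj x Hx).
  unfold Rabs in Hfar. destruct (Rcase_abs (f x)); lra.
Qed.

Definition divergence_margin (b : R) (d : nat) (eps : R) (m : list nat) : R :=
  (rho b d ^ d) ^ length m * kl_margin (edge_gap b d eps).

Lemma divergence_margin_pos b d eps m :
  0 <= b -> (1 <= d)%nat -> 0 < eps -> 0 < divergence_margin b d eps m.
Proof.
  intros Hb Hd He. destruct (rho_pow_bounds b d Hb Hd).
  apply Rmult_lt_0_compat; [apply pow_lt; auto|].
  apply kl_margin_pos, edge_gap_pos; auto.
Qed.

Lemma Omega_b_ge0 d b th : (1 <= d)%nat -> Omega d b th -> 0 <= b.
Proof.
  intros Hd [_ Hb]. pose proof (Hb 0%nat ltac:(lia)). pose proof (Rabs_pos (th 0%nat)). lra.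
Qed.

Lemma sorted_blocks_exist (f : nat -> R) d k s : (s + k <= d)%nat ->
  exists T B, NoDup (T ++ B) /\ (forall x, In x (T ++ B) -> (x < d)%nat) /\
    length T = k /\ length B = (d - (s + k))%nat /\
    (forall x y, In x T -> (y < d)%nat -> In y T \/ f y <= f x) /\
    (forall z y, In z B -> (y < d)%nat -> In y B \/ f z <= f y).
Proof.
  intro Hsk.
  destruct (sorted_Permutation_exists f (seq 0 d)) as [S [PS SS]].
  assert (NS : NoDup S) by (eapply Permutation_NoDup; [symmetry; eauto | apply seq_NoDup]).
  assert (LS : length S = d) by (rewrite (Permutation_length PS), length_seq; auto).
  assert (inS : forall y, In y S <-> (y < d)%nat).
  { intro y. split; intro H.
    - apply (Permutation_in _ PS), in_seq in H. lia.
    - apply (Permutation_in _ (Permutation_sym PS)), in_seq. lia. }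
  exists (firstn k S), (skipn (s + k) S).
  pose proof (firstn_skipn k S) as SplitT. pose proof (firstn_skipn (s + k) S) as SplitB.
  repeat split.
  - rewrite <- SplitT, <- (firstn_skipn s (skipn k S)), skipn_skipn in NS.
    apply (Permutation_NoDup (Permutation_app_swap_app _ _ _)) in NS.
    eapply NoDup_app_remove_l; eauto.
  - intros x Hx. apply inS. apply in_app_or in Hx as [Hx|Hx].
    + rewrite <- SplitT. apply in_or_app; auto.
    + rewrite <- SplitB. apply in_or_app; auto.
  - rewrite length_firstn. lia.
  - rewrite length_skipn. lia.
  - intros x y Hx Hy. apply inS in Hy. rewrite <- SplitT in Hy, SS.
    apply in_app_or in Hy as [Hy|Hy]; [left; auto | right].
    exact (StronglySorted_app_rel _ _ _ x y SS Hx Hy).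
  - intros z y Hz Hy. apply inS in Hy. rewrite <- SplitB in Hy, SS.
    apply in_app_or in Hy as [Hy|Hy]; [right | left; auto].
    exact (StronglySorted_app_rel _ _ _ y z SS Hy Hz).
Qed.

Lemma rb_divergence_far d b m ths th M eps :
  (forall a, In a m -> (1 <= a)%nat) -> (list_sum m < d)%nat ->
  Omega d b ths -> Omega d b th -> (exists a, In a m /\ (a <= M)%nat) -> 0 < eps ->
  (exists i, (i < d)%nat /\ Rabs (th i - ths i) > eps) ->
  divergence_margin b d eps m <= rb_divergence ths th M m (seq 0 d).
Proof.
  intros Hm1 Hsum Oths Oth Hkept Heps [x [Hx Hfar]].
  assert (Hd : (1 <= d)%nat) by lia.
  assert (Hb := Omega_b_ge0 d b th Hd Oth).
  destruct Oths as [Sths Bths], Oth as [Sth Bth].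
  set (Dl := fun y => th y - ths y).
  destruct (first_kept_spec M m Hkept) as [Hk Hsk].
  pose proof (Hm1 _ Hk).
  destruct (sorted_blocks_exist Dl d (first_kept M m) (skipped_before M m) ltac:(lia))
    as [T [B [NTB [HTBd [LT [LB [Htop Hbot]]]]]]].
  assert (Tne : T <> []) by (intro E; rewrite E in LT; simpl in LT; lia).
  assert (Bne : B <> []) by (intro E; rewrite E in LB; simpl in LB; lia).
  assert (inT : forall y, In y T -> (y < d)%nat) by (intros; apply HTBd, in_or_app; auto).
  destruct (exists_argmax Dl T Tne) as [i [Hi Hmax]].
  destruct (exists_argmin Dl T Tne) as [t0 [Ht0 Hmin]].
  destruct (exists_argmin Dl B Bne) as [j [Hj HminB]].
  assert (Hij : Dl i - Dl j > eps).
  { apply (spread_gt Dl d eps x); auto.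
    - unfold Dl. rewrite sumR_sub. lra.
    - intros y Hy. destruct (Htop i y Hi Hy); auto.
    - intros y Hy. destruct (Hbot j y Hj Hy); auto. }
  assert (Btau : forall y, In y B -> Dl y <= Dl t0).
  { intros y Hy. destruct (Htop t0 y Ht0 (HTBd y (in_or_app _ _ _ (or_intror Hy)))) as [HyT|]; auto.
    exfalso. exact (NoDup_app_disjoint _ _ _ NTB HyT Hy). }
  assert (Htau : Rabs (Dl t0) <= 2 * b).
  { pose proof (Rabs_le_inv _ _ (Bth t0 (inT t0 Ht0))).
    pose proof (Rabs_le_inv _ _ (Bths t0 (inT t0 Ht0))).
    apply Rabs_le. unfold Dl. lra. }
  assert (Gap := edge_prob_gap th ths b d eps T B (Dl t0) i j Hd Heps Bth Bths
                   HTBd NTB ltac:(lia) Hi Hj Hmin Btau Hij Htau).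
  apply (rb_divergence_ge_margin ths th b d M (edge_gap b d eps) Hd Hb
           (edge_gap_pos b d eps Hd Heps) Bths m (seq 0 d) T B); auto.
  - apply seq_NoDup.
  - intros y Hy. apply in_seq in Hy. lia.
  - rewrite length_seq. lia.
  - intros y Hy. apply in_seq. pose proof (HTBd y Hy). lia.
  - rewrite length_seq. lia.
Qed.
(** * Counts and concentration *)

Definition kronecker (r sg : list nat) : R := if list_eq_dec Nat.eq_dec r sg then 1 else 0.

Definition ranking_count (sg : list nat) (s : list (list nat)) : R :=
  INR (count_occ (list_eq_dec Nat.eq_dec) s sg).

Lemma ranking_count_cons sg r s : ranking_count sg (r :: s) = kronecker r sg + ranking_count sg s.
Proof.
  unfold ranking_count, kronecker. destruct (list_eq_dec Nat.eq_dec r sg) as [E|E].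
  - rewrite count_occ_cons_eq, S_INR by auto. ring.
  - rewrite count_occ_cons_neq by auto. ring.
Qed.

Lemma sumR_kronecker (f : list nat -> R) L sg : NoDup L -> In sg L ->
  sumR (map (fun r => kronecker r sg * f r) L) = f sg.
Proof.
  induction L as [|x L IH]; simpl; intros H Hs; [contradiction|].
  inversion H as [|? ? H1 H2]; subst. unfold kronecker at 1.
  destruct (list_eq_dec Nat.eq_dec x sg) as [<-|E].
  - rewrite (sumR_map_ext_in _ (fun _ => 0)), sumR_const; [ring|].
    intros r Hr. unfold kronecker.
    destruct (list_eq_dec Nat.eq_dec r x); [subst; contradiction | ring].
  - destruct Hs as [->|Hs]; [congruence|]. rewrite IH; auto. ring.
Qed.

Lemma NoDup_rankings d : NoDup (rankings d).
Proof. apply NoDup_perms, seq_NoDup. Qed.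

Lemma In_rankings d sg : In sg (rankings d) -> NoDup sg /\ forall x, In x sg -> (x < d)%nat.
Proof.
  intro H. apply In_perms in H. split.
  - eapply Permutation_NoDup; [eauto | apply seq_NoDup].
  - intros x Hx. apply (Permutation_in _ (Permutation_sym H)), in_seq in Hx. lia.
Qed.

Lemma samples_in_rankings d n s : In s (samples d n) -> forall r, In r s -> In r (rankings d).
Proof.
  revert s; induction n as [|n IH]; simpl; intros s Hs r Hr.
  - destruct Hs as [<-|[]]. contradiction.
  - apply in_flat_map in Hs as [s' [Hs' Hs]]. apply in_map_iff in Hs as [r' [<- Hr']].
    destruct Hr as [<-|Hr]; eauto.
Qed.

Lemma L_RB_counts th M m d s : (forall r, In r s -> In r (rankings d)) ->
  L_RB th M m s = sumR (map (fun sg => ranking_count sg s * rb_user th M m sg) (rankings d)).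
Proof.
  induction s as [|r s IH]; intros H; unfold L_RB in *.
  - simpl. rewrite (sumR_map_ext_in _ (fun _ => 0)), sumR_const; [ring|].
    intros. unfold ranking_count. simpl. ring.
  - change (sumR (map (rb_user th M m) (r :: s)))
      with (rb_user th M m r + sumR (map (rb_user th M m) s)).
    rewrite IH by (intros; apply H; right; auto).
    rewrite (sumR_map_ext_in (fun sg => ranking_count sg (r :: s) * rb_user th M m sg)
                             (fun sg => kronecker sg r * rb_user th M m sg +
                                          ranking_count sg s * rb_user th M m sg)).
    + rewrite sumR_add, (sumR_kronecker (rb_user th M m)); auto using NoDup_rankings.
      apply H; left; auto.
    + intros sg _. rewrite ranking_count_cons. unfold kronecker.
      destruct (list_eq_dec Nat.eq_dec r sg), (list_eq_dec Nat.eq_dec sg r); subst;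
        try congruence; ring.
Qed.

Definition sample_prob (th : nat -> R) (s : list (list nat)) : R := prodR (map (pl_prob th) s).

Lemma sample_prob_ge0 th s : 0 <= sample_prob th s.
Proof.
  induction s; unfold sample_prob in *; simpl; [lra|].
  apply Rmult_le_pos; auto. left; apply pl_prob_pos.
Qed.

Lemma sum_rankings_pl_prob th d : sumR (map (pl_prob th) (rankings d)) = 1.
Proof. apply sum_pl_prob_perms, seq_NoDup. Qed.

Lemma sum_samples_S th d n (f : list (list nat) -> R) :
  sumR (map (fun s => sample_prob th s * f s) (samples d (S n))) =
  sumR (map (fun s => sample_prob th s *
                      sumR (map (fun r => pl_prob th r * f (r :: s)) (rankings d))) (samples d n)).
Proof.
  simpl. rewrite sumR_flat_map. apply sumR_map_ext_in. intros s _. rewrite map_map.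
  rewrite <- sumR_scal_l. apply sumR_map_ext_in. intros r _. unfold sample_prob; simpl. ring.
Qed.

Lemma sum_sample_prob th d n : sumR (map (fun s => sample_prob th s * 1) (samples d n)) = 1.
Proof.
  induction n as [|n IH]; [unfold sample_prob; simpl; ring|].
  rewrite sum_samples_S, (sumR_map_ext_in _ (fun s => sample_prob th s * 1)); [exact IH|].
  intros s _. f_equal.
  rewrite (sumR_map_ext_in _ (pl_prob th)) by (intros; ring). apply sum_rankings_pl_prob.
Qed.

Lemma sum_samples_le th d n (f g : list (list nat) -> R) : (forall s, f s <= g s) ->
  sumR (map (fun s => sample_prob th s * f s) (samples d n)) <=
  sumR (map (fun s => sample_prob th s * g s) (samples d n)).
Proof. intro H. apply sumR_le. intros. apply Rmult_le_compat_l; [apply sample_prob_ge0 | auto]. Qed.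

(** The count is binomial with [n] trials, so its variance is at most [n]. *)
Lemma ranking_count_second_moment th d sg n : In sg (rankings d) ->
  sumR (map (fun s => sample_prob th s * (ranking_count sg s - INR n * pl_prob th sg) ^ 2)
            (samples d n)) <= INR n.
Proof.
  intros Hsg. set (p := pl_prob th sg).
  assert (Hp : 0 < p) by apply pl_prob_pos.
  induction n as [|n IH].
  - unfold sample_prob, ranking_count. simpl. lra.
  - rewrite sum_samples_S.
    eapply Rle_trans.
    { apply (sum_samples_le th d n _ (fun s => (ranking_count sg s - INR n * p) ^ 2 + 1)).
      intros s. set (D := ranking_count sg s - INR n * p).
      rewrite (sumR_map_ext_in _ (fun r => pl_prob th r * D ^ 2 +
                 2 * D * (kronecker r sg * pl_prob th r) +
                 kronecker r sg * ((1 - 2 * p) * pl_prob th r) +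
                 (p ^ 2 - 2 * D * p) * pl_prob th r)).
      - rewrite !sumR_add, !sumR_scal_l.
        rewrite (sumR_map_ext_in (fun r => pl_prob th r * D ^ 2) (fun r => D ^ 2 * pl_prob th r))
          by (intros; ring).
        rewrite sumR_scal_l, sum_rankings_pl_prob.
        rewrite (sumR_kronecker (pl_prob th)),
          (sumR_kronecker (fun r => (1 - 2 * p) * pl_prob th r))
          by auto using NoDup_rankings.
        fold p. assert (p - p ^ 2 <= 1) by nra. nra.
      - intros r _. rewrite ranking_count_cons, S_INR. unfold D, kronecker.
        destruct (list_eq_dec Nat.eq_dec r sg) as [E|E]; [subst r; fold p|]; ring. }
    rewrite (sumR_map_ext_in _ (fun s => sample_prob th s * (ranking_count sg s - INR n * p) ^ 2 +
                                         sample_prob th s * 1)) by (intros; ring).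
    rewrite sumR_add, sum_sample_prob, S_INR. fold p in IH. lra.
Qed.

(** Bounds [|ln P(B ≺ T)|], as [rho b d ^ d] bounds edge probabilities from below. *)
Definition loglik_cap (b : R) (d : nat) : R := - ln (rho b d ^ d).

Lemma loglik_cap_ge0 b d : (1 <= d)%nat -> 0 <= b -> 0 <= loglik_cap b d.
Proof.
  intros Hd Hb. destruct (rho_pow_bounds b d Hb Hd) as [r0 r1].
  pose proof (ln_le _ _ r0 r1) as Hln. rewrite ln_1 in Hln. unfold loglik_cap. lra.
Qed.

Lemma rb_user_bounded th b d M : (1 <= d)%nat -> 0 <= b ->
  (forall x, (x < d)%nat -> Rabs (th x) <= b) ->
  forall m s, NoDup s -> (forall x, In x s -> (x < d)%nat) ->
  Rabs (rb_user th M m s) <= INR (length m) * loglik_cap b d.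
Proof.
  intros Hd Hb Hth m. induction m as [|ma m IH]; intros s Hs Hx.
  - simpl. rewrite Rabs_R0. lra.
  - change (rb_user th M (ma :: m) s) with
      ((if Nat.leb ma M then ln (edge_prob th (firstn ma s) (skipn ma s)) else 0)
       + rb_user th M m (skipn ma s)).
    rewrite <- (firstn_skipn ma s) in Hs, Hx.
    pose proof (loglik_cap_ge0 b d Hd Hb).
    assert (E1 : Rabs (if Nat.leb ma M then ln (edge_prob th (firstn ma s) (skipn ma s)) else 0)
                 <= loglik_cap b d).
    { destruct (Nat.leb ma M); [|rewrite Rabs_R0; auto].
      pose proof (edge_prob_lower_bound th b d _ _ Hd Hb Hth Hs Hx) as L.
      pose proof (edge_prob_le1 th _ (skipn ma s) (NoDup_app_remove_r _ _ Hs)) as U.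
      destruct (rho_pow_bounds b d Hb Hd) as [r0 _].
      set (e := edge_prob th (firstn ma s) (skipn ma s)) in *.
      pose proof (ln_le _ _ r0 L). pose proof (ln_le e 1 ltac:(lra) U) as Hup.
      rewrite ln_1 in Hup. unfold loglik_cap in *. apply Rabs_le. lra. }
    assert (E2 : Rabs (rb_user th M m (skipn ma s)) <= INR (length m) * loglik_cap b d).
    { apply IH; [eapply NoDup_app_remove_l; eauto | intros; apply Hx, in_or_app; auto]. }
    eapply Rle_trans; [apply Rabs_triang|].
    change (length (ma :: m)) with (S (length m)). rewrite S_INR. lra.
Qed.

Lemma sumR_mul_ge_neg {A} (x g : A -> R) L a C : 0 <= a ->
  (forall y, In y L -> x y ^ 2 <= a ^ 2) -> (forall y, In y L -> Rabs (g y) <= C) ->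
  - (INR (length L) * (a * C)) <= sumR (map (fun y => x y * g y) L).
Proof.
  intros Ha Hx Hg. apply Rle_trans with (sumR (map (fun _ => - (a * C)) L)).
  { rewrite sumR_const. lra. }
  apply sumR_le. intros y Hy. pose proof (Hx y Hy). pose proof (Hg y Hy).
  assert (Rabs (x y) <= a) by (unfold Rabs; destruct (Rcase_abs (x y)); nra).
  assert (Hxg : Rabs (x y * g y) <= a * C)
    by (rewrite Rabs_mult; apply Rmult_le_compat; auto; apply Rabs_pos).
  pose proof (Rle_abs (- (x y * g y))) as Hneg. rewrite Rabs_Ropp in Hneg. lra.
Qed.

Definition count_deviation (ths : nat -> R) (d n : nat) (s : list (list nat)) : R :=
  sumR (map (fun sg => (ranking_count sg s - INR n * pl_prob ths sg) ^ 2) (rankings d)).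

Definition gap_cap (b : R) (d : nat) (m : list nat) : R := 2 * (INR (length m) * loglik_cap b d).

Lemma gap_cap_ge0 b d m : (1 <= d)%nat -> 0 <= b -> 0 <= gap_cap b d m.
Proof.
  intros Hd Hb. pose proof (loglik_cap_ge0 b d Hd Hb). pose proof (pos_INR (length m)).
  unfold gap_cap. nra.
Qed.

(** Deviations of the counts up to [n] times this tolerance cannot undo
    half of the expected gap [n * divergence_margin]. *)
Definition deviation_tol (b : R) (d : nat) (eps : R) (m : list nat) : R :=
  divergence_margin b d eps m / (2 * (INR (length (rankings d)) * gap_cap b d m + 1)).

Lemma deviation_tol_pos b d eps m :
  0 <= b -> (1 <= d)%nat -> 0 < eps -> 0 < deviation_tol b d eps m.
Proof.
  intros Hb Hd He. pose proof (divergence_margin_pos b d eps m Hb Hd He).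
  pose proof (gap_cap_ge0 b d m Hd Hb).
  pose proof (pos_INR (length (rankings d))).
  apply Rdiv_lt_0_compat; nra.
Qed.

Lemma rb_gap_bounded ths th b d M m sg : (1 <= d)%nat -> 0 <= b ->
  Omega d b ths -> Omega d b th -> In sg (rankings d) ->
  Rabs (rb_gap ths th M m sg) <= gap_cap b d m.
Proof.
  intros Hd Hb [_ B1] [_ B2] Hsg. destruct (In_rankings d sg Hsg) as [N1 N2].
  pose proof (rb_user_bounded ths b d M Hd Hb B1 m sg N1 N2).
  pose proof (rb_user_bounded th b d M Hd Hb B2 m sg N1 N2).
  unfold rb_gap, gap_cap. eapply Rle_trans; [apply Rabs_triang|]. rewrite Rabs_Ropp. lra.
Qed.

Lemma L_RB_gap_counts ths th M m d n s : In s (samples d n) ->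
  L_RB ths M m s - L_RB th M m s =
  INR n * rb_divergence ths th M m (seq 0 d) +
  sumR (map (fun sg => (ranking_count sg s - INR n * pl_prob ths sg) * rb_gap ths th M m sg)
            (rankings d)).
Proof.
  intro Hs. pose proof (samples_in_rankings d n s Hs) as Hin.
  rewrite (L_RB_counts ths M m d s Hin), (L_RB_counts th M m d s Hin), <- sumR_sub.
  unfold rb_divergence. rewrite <- sumR_scal_l, <- sumR_add.
  apply sumR_map_ext_in. intros. unfold rb_gap. ring.
Qed.

Lemma no_far_estimate d b m ths M eps n s :
  (forall a, In a m -> (1 <= a)%nat) -> (list_sum m < d)%nat ->
  Omega d b ths -> (exists a, In a m /\ (a <= M)%nat) -> 0 < eps ->
  (1 <= n)%nat -> In s (samples d n) ->
  count_deviation ths d n s <= (INR n * deviation_tol b d eps m) ^ 2 ->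
  ~ (exists th, is_RB_estimate d b M m s th /\ exists i, (i < d)%nat /\ Rabs (th i - ths i) > eps).
Proof.
  intros Hm1 Hsum Oths Hkept Heps Hn Hs Hdev [th [[Oth Hmax] Hfar]].
  assert (Hd : (1 <= d)%nat) by lia.
  assert (Hb := Omega_b_ge0 d b ths Hd Oths).
  pose proof (rb_divergence_far d b m ths th M eps Hm1 Hsum Oths Oth Hkept Heps Hfar) as Hfar'.
  pose proof (Hmax ths Oths) as Hle.
  pose proof (L_RB_gap_counts ths th M m d n s Hs) as Hdec.
  set (gam := divergence_margin b d eps m) in *. set (dl := deviation_tol b d eps m) in *.
  set (C := gap_cap b d m). set (N := INR (length (rankings d))).
  assert (gam_pos : 0 < gam) by (apply divergence_margin_pos; auto).
  assert (C0 : 0 <= C) by (apply gap_cap_ge0; auto).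
  assert (N0 : 0 <= N) by apply pos_INR.
  assert (dl_pos : 0 < dl) by (apply deviation_tol_pos; auto).
  assert (n1 : 1 <= INR n) by (apply (le_INR 1); auto).
  assert (Fluct : - (N * (INR n * dl * C)) <=
     sumR (map (fun sg => (ranking_count sg s - INR n * pl_prob ths sg) * rb_gap ths th M m sg)
               (rankings d))).
  { apply (sumR_mul_ge_neg _ _ _ (INR n * dl) C); [nra | |].
    - intros sg Hsg. eapply Rle_trans; [|exact Hdev]. unfold count_deviation.
      apply (sumR_ge_term (fun sg => (ranking_count sg s - INR n * pl_prob ths sg) ^ 2)); auto.
      intros; apply pow2_ge_0.
    - intros sg Hsg. apply rb_gap_bounded; auto. }
  assert (Small : N * dl * C <= gam / 2).
  { unfold dl, deviation_tol. fold gam N C. apply (Rmult_le_reg_r (2 * (N * C + 1))); [nra|].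
    unfold Rdiv. field_simplify; nra. }
  assert (INR n * (N * dl * C) <= INR n * (gam / 2)) by (apply Rmult_le_compat_l; lra).
  nra.
Qed.

Lemma prob_ge0 d th n E : 0 <= prob d th n E.
Proof.
  apply sumR_ge0. intros s _. apply Rmult_le_pos; [apply sample_prob_ge0|].
  unfold indic. destruct (excluded_middle_informative (E s)); lra.
Qed.

Lemma expected_count_deviation_le ths d n :
  sumR (map (fun s => sample_prob ths s * count_deviation ths d n s) (samples d n))
  <= INR (length (rankings d)) * INR n.
Proof.
  unfold count_deviation.
  rewrite (sumR_map_ext_in _ (fun s => sumR (map (fun sg => sample_prob ths s *
             (ranking_count sg s - INR n * pl_prob ths sg) ^ 2) (rankings d))))
    by (intros; rewrite <- sumR_scal_l; auto).
  rewrite sumR_swap, <- sumR_const.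
  apply sumR_le. intros sg Hsg. apply ranking_count_second_moment; auto.
Qed.

(** Chebyshev's inequality for the event of the theorem. *)
Lemma prob_far_estimate_le d b m ths M eps n :
  (forall a, In a m -> (1 <= a)%nat) -> (list_sum m < d)%nat ->
  Omega d b ths -> (exists a, In a m /\ (a <= M)%nat) -> 0 < eps -> (1 <= n)%nat ->
  prob d ths n (fun s => exists th, is_RB_estimate d b M m s th /\
                                    exists i, (i < d)%nat /\ Rabs (th i - ths i) > eps)
  <= INR (length (rankings d)) / deviation_tol b d eps m ^ 2 / INR n.
Proof.
  intros Hm1 Hsum Oths Hkept Heps Hn.
  assert (Hd : (1 <= d)%nat) by lia.
  assert (Hb := Omega_b_ge0 d b ths Hd Oths).
  set (dl := deviation_tol b d eps m).
  assert (dl_pos : 0 < dl) by (apply deviation_tol_pos; auto).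
  assert (n1 : 1 <= INR n) by (apply (le_INR 1); auto).
  assert (c_pos : 0 < (INR n * dl) ^ 2) by (apply pow_lt; nra).
  apply Rle_trans with (sumR (map (fun s => sample_prob ths s *
                                    (count_deviation ths d n s / (INR n * dl) ^ 2)) (samples d n))).
  - apply sumR_le. intros s Hs. apply Rmult_le_compat_l; [apply sample_prob_ge0|].
    assert (0 <= count_deviation ths d n s) by (apply sumR_ge0; intros; apply pow2_ge_0).
    unfold indic. destruct (excluded_middle_informative _) as [HE|HE].
    + destruct (Rle_dec (count_deviation ths d n s) ((INR n * dl) ^ 2)) as [Y|Y].
      * exfalso. exact (no_far_estimate d b m ths M eps n s Hm1 Hsum Oths Hkept Heps Hn Hs Y HE).
      * apply (Rmult_le_reg_r ((INR n * dl) ^ 2)); auto. unfold Rdiv.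
        rewrite Rmult_assoc, Rinv_l, Rmult_1_r by lra. lra.
    + unfold Rdiv. apply Rmult_le_pos; [auto | left; apply Rinv_0_lt_compat; auto].
  - rewrite (sumR_map_ext_in _ (fun s => / (INR n * dl) ^ 2 *
                                         (sample_prob ths s * count_deviation ths d n s)))
      by (intros; unfold Rdiv; ring).
    rewrite sumR_scal_l.
    apply Rle_trans with (/ (INR n * dl) ^ 2 * (INR (length (rankings d)) * INR n)).
    + apply Rmult_le_compat_l; [left; apply Rinv_0_lt_compat; auto|].
      apply expected_count_deviation_le.
    + right. fold dl. field. split; lra.
Qed.

Lemma Un_cv_0_of_bound (u : nat -> R) C :
  (forall n, (1 <= n)%nat -> 0 <= u n <= C / INR n) -> Un_cv u 0.
Proof.
  intros Hu e He. destruct (INR_archimed e C He) as [N0 HN0].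
  exists (max N0 1). intros n Hn. unfold Rdist. rewrite Rminus_0_r.
  assert (n1 : (1 <= n)%nat) by lia.
  destruct (Hu n n1) as [U0 U1]. rewrite Rabs_right by lra.
  assert (npos : 0 < INR n) by (apply lt_0_INR; lia).
  assert (INR N0 <= INR n) by (apply le_INR; lia).
  eapply Rle_lt_trans; [exact U1|].
  apply (Rmult_lt_reg_r (INR n)); auto. unfold Rdiv.
  rewrite Rmult_assoc, Rinv_l, Rmult_1_r by lra. nra.
Qed.

Theorem mainTheorem4 :
  forall (d : nat) (b : R) (m : list nat) (th_star : nat -> R) (M : nat),
    m <> [] ->
    (forall a, In a m -> (1 <= a)%nat) ->
    (list_sum m < d)%nat ->
    Omega d b th_star ->
    (exists a, In a m /\ (a <= M)%nat) ->
    forall eps : R, eps > 0 ->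
      Un_cv
        (fun n => prob d th_star n
           (fun sample => exists th,
              is_RB_estimate d b M m sample th /\
              exists i, (i < d)%nat /\ Rabs (th i - th_star i) > eps))
        0.
Proof.
  (* [m <> []] is implied by the existence of a kept block. *)
  intros d b m ths M _ Hm1 Hsum Oths Hkept eps Heps.
  apply (Un_cv_0_of_bound _ (INR (length (rankings d)) / deviation_tol b d eps m ^ 2)).
  intros n Hn. split.
  - apply prob_ge0.
  - apply prob_far_estimate_le; auto.
Qed.
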